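(* Let $\lambda>0$ and let $f$ be analytic in $\mathbb{D}=\{z:|z|<1\}$ with $f(0)=0$, $f'(0)=1$. If \[|z^2f''(z)+zf'(z)-f(z)|\le3\lambda\qquad(z\in\mathbb{D}),\] then $f\in\Omega_\lambda$. The number $3\lambda$ is best possible.
   Context: $\Omega_\lambda$ denotes the set of functions $f$ analytic in $\mathbb{D}$ with $f(0)=0$, $f'(0)=1$, such that $zf'(z)-f(z)=\lambda z^2\phi(z)$ for some analytic $\phi$ on $\mathbb{D}$ with $|\phi(z)|\le1$. *)

From Stdlib Require Import Reals.
From Coquelicot Require Import Coquelicot.
Open Scope R_scope.

Definition inD (z : C) : Prop := Cmod z < 1.

Definition analytic_on_D (f : C -> C) : Prop :=
  forall z : C, inD z -> ex_derive (K := C_AbsRing) (V := C_NormedModule) f z.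

Definition derivative_on_D (f f1 : C -> C) : Prop :=
  forall z : C, inD z -> is_derive (K := C_AbsRing) (V := C_NormedModule) f z (f1 z).

Definition Omega (lam : R) (f : C -> C) : Prop :=
  exists f1 : C -> C,
    derivative_on_D f f1 /\ f 0%C = 0%C /\ f1 0%C = 1%C /\
    exists phi : C -> C,
      analytic_on_D phi /\
      (forall z, inD z -> Cmod (phi z) <= 1) /\
      (forall z, inD z -> (z * f1 z - f z = RtoC lam * z ^ 2 * phi z)%C).

(* Write g = z f' - f and k = z² f'' + z f' - f, so that k = (z g)'.  Since
   f(0) = 0, both g and k vanish to second order at 0, and the maximum modulus
   principle applied to k(z)/z² turns |k| <= 3λ into |k(z)| <= 3λ|z|².
   Integrating along the segment, z g(z) = ∫₀¹ k(tz) z dt, hence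
   |g(z)| <= 3λ|z|² ∫₀¹ t² dt = λ|z|², and φ = g/(λz²) has a removable
   singularity at 0.  For μ > 3λ the function z + (μ/3) z² has k = μ z² but
   forces φ = μ/(3λ) > 1.
   Only C¹ regularity is available at first, so Cauchy's formula on a circle is
   obtained by contracting the circle to its centre and differentiating the
   integral in the contraction parameter; the maximum modulus principle then
   follows from Cauchy's formula for K(y) ρ²/(ρ² - ζ̄ y), whose kernel on the
   circle is the Poisson kernel. *)

From Stdlib Require Import Reals Lra Lia FunctionalExtensionality Factorial.
From Coquelicot Require Import Coquelicot.
Open Scope R_scope.

(** * Moduli and continuity *)

Lemma fst_le_Cmod (x : C) : Rabs (fst x) <= Cmod x.
Proof. eapply Rle_trans; [apply Rmax_l | apply Rmax_Cmod]. Qed.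

Lemma snd_le_Cmod (x : C) : Rabs (snd x) <= Cmod x.
Proof. eapply Rle_trans; [apply Rmax_r | apply Rmax_Cmod]. Qed.

Lemma Cmod_mult_self (x : C) : Cmod x * Cmod x = fst x * fst x + snd x * snd x.
Proof. unfold Cmod. rewrite sqrt_sqrt; [ring|]. destruct x as [a b]; simpl. nra. Qed.

Lemma Cmod_le_Rabs_fst_snd (x : C) : Cmod x <= Rabs (fst x) + Rabs (snd x).
Proof.
  pose proof (Rabs_pos (fst x)); pose proof (Rabs_pos (snd x)).
  apply Rsqr_incr_0_var; [|lra]. unfold Rsqr. rewrite Cmod_mult_self.
  pose proof (Rsqr_abs (fst x)); pose proof (Rsqr_abs (snd x)). unfold Rsqr in *. nra.
Qed.

Lemma Cmod_minus_sym (x y : C) : Cmod (x - y) = Cmod (y - x).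
Proof. rewrite <- Cmod_opp. f_equal. ring. Qed.

Lemma Cmod_ge_Cmod_minus (x y : C) : Cmod x - Cmod y <= Cmod (x - y).
Proof. pose proof (Cmod_triangle (x - y) y). replace (x - y + y)%C with x in H by ring. lra. Qed.

Lemma Rabs_Cmod_minus_le (x y : C) : Rabs (Cmod x - Cmod y) <= Cmod (x - y).
Proof.
  apply Rabs_le. pose proof (Cmod_ge_Cmod_minus x y). pose proof (Cmod_ge_Cmod_minus y x).
  rewrite Cmod_minus_sym in H0. lra.
Qed.

Lemma Cmod_inv_le (x : C) d : 0 < d -> d <= Cmod x -> Cmod (/ x) <= / d.
Proof.
  intros Hd Hx. assert (x <> 0%C) by (intro E; subst; rewrite Cmod_0 in Hx; lra).
  rewrite Cmod_inv by auto. apply Rinv_le_contravar; auto.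
Qed.

Lemma Cmult_conj_Cmod (x : C) : (x * Cconj x)%C = RtoC (Cmod x * Cmod x).
Proof. rewrite Cmod_mult_self. destruct x as [a b]. apply injective_projections; simpl; ring. Qed.

Lemma Ci_mult_Ci : (Ci * Ci)%C = (- 1)%C.
Proof. apply injective_projections; simpl; ring. Qed.

Lemma RtoC_neq_0 (x : R) : x <> 0 -> RtoC x <> 0%C.
Proof. intros Hx E. apply Hx. exact (RtoC_inj _ _ E). Qed.

Section ContinuityWrt.

Context {T : Type} (dist : T -> T -> R).

Definition cont_wrt (f : T -> C) (x : T) : Prop :=
  forall eps, 0 < eps -> exists d, 0 < d /\ forall y, dist y x < d -> Cmod (f y - f x) < eps.

Lemma cont_wrt_const (c : C) x : cont_wrt (fun _ => c) x.
Proof.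
  intros eps Heps. exists 1. split; [lra|]. intros.
  replace (c - c)%C with (RtoC 0) by ring. rewrite Cmod_0. auto.
Qed.

Lemma cont_wrt_plus (f g : T -> C) x :
  cont_wrt f x -> cont_wrt g x -> cont_wrt (fun y => f y + g y)%C x.
Proof.
  intros Hf Hg eps Heps.
  destruct (Hf (eps/2) ltac:(lra)) as [d1 [Hd1 H1]].
  destruct (Hg (eps/2) ltac:(lra)) as [d2 [Hd2 H2]].
  exists (Rmin d1 d2). split; [apply Rmin_pos; auto|]. intros y Hy.
  specialize (H1 y (Rlt_le_trans _ _ _ Hy (Rmin_l _ _))).
  specialize (H2 y (Rlt_le_trans _ _ _ Hy (Rmin_r _ _))).
  replace (f y + g y - (f x + g x))%C with ((f y - f x) + (g y - g x))%C by ring.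
  eapply Rle_lt_trans; [apply Cmod_triangle|]. lra.
Qed.

Lemma cont_wrt_mult (f g : T -> C) x :
  cont_wrt f x -> cont_wrt g x -> cont_wrt (fun y => f y * g y)%C x.
Proof.
  intros Hf Hg eps Heps.
  set (A := Cmod (f x)). set (B := Cmod (g x)).
  assert (HA : 0 <= A) by apply Cmod_ge_0. assert (HB : 0 <= B) by apply Cmod_ge_0.
  set (e := Rmin 1 (eps / (2 * (1 + A + B)))).
  assert (He : 0 < e) by (apply Rmin_pos; [lra| apply Rdiv_lt_0_compat; lra]).
  assert (He1 : e <= 1) by apply Rmin_l.
  assert (He2 : e * (1 + A + B) <= eps / 2).
  { assert (e <= eps / (2 * (1 + A + B))) by apply Rmin_r.
    apply (Rmult_le_compat_r (1 + A + B)) in H; [|lra]. field_simplify in H; lra. }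
  destruct (Hf e He) as [d1 [Hd1 H1]].
  destruct (Hg e He) as [d2 [Hd2 H2]].
  exists (Rmin d1 d2). split; [apply Rmin_pos; auto|]. intros y Hy.
  specialize (H1 y (Rlt_le_trans _ _ _ Hy (Rmin_l _ _))).
  specialize (H2 y (Rlt_le_trans _ _ _ Hy (Rmin_r _ _))).
  replace (f y * g y - f x * g x)%C with
    ((f y - f x) * (g y - g x) + (f y - f x) * g x + f x * (g y - g x))%C by ring.
  eapply Rle_lt_trans; [apply Cmod_triangle|].
  eapply Rle_lt_trans; [apply Rplus_le_compat_r; apply Cmod_triangle|].
  rewrite !Cmod_mult. fold A B.
  pose proof (Cmod_ge_0 (f y - f x)%C). pose proof (Cmod_ge_0 (g y - g x)%C).
  assert (Cmod (f y - f x) * Cmod (g y - g x) <= e * 1) by (apply Rmult_le_compat; lra).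
  assert (Cmod (f y - f x) * B <= e * B) by (apply Rmult_le_compat_r; lra).
  assert (A * Cmod (g y - g x) <= A * e) by (apply Rmult_le_compat_l; lra).
  nra.
Qed.

Lemma cont_wrt_pow (f : T -> C) x n : cont_wrt f x -> cont_wrt (fun y => f y ^ n)%C x.
Proof.
  intros Hf. induction n as [|n IH]; simpl.
  - apply cont_wrt_const.
  - apply cont_wrt_mult; auto.
Qed.

End ContinuityWrt.

Notation ccont := (cont_wrt (fun y z : C => Cmod (y - z))).
Notation pcont := (cont_wrt (fun s t : R => Rabs (s - t))).
Notation pcont2 := (cont_wrt (fun p q : R * R => Rmax (Rabs (fst p - fst q)) (Rabs (snd p - snd q)))).

Lemma cont_wrt_comp {T : Type} (dist : T -> T -> R) (F : C -> C) (f : T -> C) x :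
  ccont F (f x) -> cont_wrt dist f x -> cont_wrt dist (fun y => F (f y)) x.
Proof.
  intros HF Hf eps Heps. destruct (HF eps Heps) as [d [Hd H']].
  destruct (Hf d Hd) as [d2 [Hd2 H2]]. exists d2; split; auto.
Qed.

Lemma pcont2_fst (p : R -> C) u v : pcont p u -> pcont2 (fun q => p (fst q)) (u, v).
Proof.
  intros H eps Heps. destruct (H eps Heps) as [d [Hd H']]. exists d; split; auto.
  intros [a b] Hab. apply H'. eapply Rle_lt_trans; [apply Rmax_l|exact Hab].
Qed.

Lemma pcont2_snd (p : R -> C) u v : pcont p v -> pcont2 (fun q => p (snd q)) (u, v).
Proof.
  intros H eps Heps. destruct (H eps Heps) as [d [Hd H']]. exists d; split; auto.
  intros [a b] Hab. apply H'. eapply Rle_lt_trans; [apply Rmax_r|exact Hab].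
Qed.

Lemma pcont_fst_continuous (f : R -> C) t : pcont f t -> continuous (fun s => fst (f s)) t.
Proof.
  intros H. apply continuity_pt_filterlim.
  intros eps Heps. destruct (H eps Heps) as [d [Hd H']]. exists d. split; auto.
  intros x [_ Hx]. eapply Rle_lt_trans; [apply (fst_le_Cmod (f x - f t)) | apply (H' x Hx)].
Qed.

Lemma pcont_snd_continuous (f : R -> C) t : pcont f t -> continuous (fun s => snd (f s)) t.
Proof.
  intros H. apply continuity_pt_filterlim.
  intros eps Heps. destruct (H eps Heps) as [d [Hd H']]. exists d. split; auto.
  intros x [_ Hx]. eapply Rle_lt_trans; [apply (snd_le_Cmod (f x - f t)) | apply (H' x Hx)].
Qed.

Lemma pcont_bounded (f : R -> C) a b : a <= b -> (forall t, a <= t <= b -> pcont f t) ->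
  exists M, 0 <= M /\ forall t, a <= t <= b -> Cmod (f t) <= M.
Proof.
  intros Hab H.
  destruct (continuity_ab_maj (fun t => Cmod (f t)) a b Hab) as [Mx [HM _]].
  - intros c Hc eps Heps. destruct (H c Hc eps Heps) as [d [Hd H']]. exists d. split; auto.
    intros x [_ Hx]. eapply Rle_lt_trans; [apply Rabs_Cmod_minus_le | apply H'; auto].
  - exists (Cmod (f Mx)). split; [apply Cmod_ge_0|]. auto.
Qed.

(** * Complex derivatives and derivatives of paths *)

Definition is_cderive (F : C -> C) (z l : C) : Prop :=
  forall eps, 0 < eps -> exists d, 0 < d /\
    forall y, Cmod (y - z) < d -> Cmod (F y - F z - l * (y - z)) <= eps * Cmod (y - z).

Local Ltac solve_is_cderive_iff :=
  unfold is_derive, filterdiff; split;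
  [ intros [_ H] eps Heps;
    destruct (H _ (fun P HP => HP) (mkposreal eps Heps)) as [d Hd];
    exists d; split; [apply cond_pos|];
    intros y Hy; rewrite Cmult_comm; apply (Hd y); exact Hy
  | intros H; split; [apply is_linear_scal_l|];
    intros x Hx;
    assert (Hzx := is_filter_lim_locally_unique (K := C_AbsRing)
                     (V := AbsRing_NormedModule C_AbsRing) _ _ Hx); subst x;
    intros [eps Heps]; destruct (H eps Heps) as [d [Hd Hd']];
    exists (mkposreal d Hd); intros y Hy; simpl;
    match goal with |- context [scal (minus y ?z) ?l] =>
      change (scal (minus y z) l) with ((y - z) * l)%C end;
    rewrite Cmult_comm; apply Hd'; exact Hy ].

(* Coquelicot gives [C] two different normed-module structures over itself;
   the product and chain rules are stated for the second one. *)
Lemma is_cderive_iff F z l :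
  is_derive (K := C_AbsRing) (V := C_NormedModule) F z l <-> is_cderive F z l.
Proof. solve_is_cderive_iff. Qed.

Lemma is_cderive_iff_AbsRing F z l :
  is_derive (K := C_AbsRing) (V := AbsRing_NormedModule C_AbsRing) F z l <-> is_cderive F z l.
Proof. solve_is_cderive_iff. Qed.

Lemma is_cderive_ext_val F z l l' : l = l' -> is_cderive F z l -> is_cderive F z l'.
Proof. intros ->; auto. Qed.

Lemma is_cderive_plus F G z a b :
  is_cderive F z a -> is_cderive G z b -> is_cderive (fun y => F y + G y)%C z (a + b)%C.
Proof.
  rewrite <- !is_cderive_iff. intros. apply (is_derive_plus (K := C_AbsRing) (V := C_NormedModule)); auto.
Qed.

Lemma is_cderive_minus F G z a b :
  is_cderive F z a -> is_cderive G z b -> is_cderive (fun y => F y - G y)%C z (a - b)%C.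
Proof.
  rewrite <- !is_cderive_iff. intros. apply (is_derive_minus (K := C_AbsRing) (V := C_NormedModule)); auto.
Qed.

Lemma is_cderive_mult F G z a b : is_cderive F z a -> is_cderive G z b ->
  is_cderive (fun y => F y * G y)%C z (a * G z + F z * b)%C.
Proof.
  rewrite <- !is_cderive_iff_AbsRing. intros HF HG.
  exact (is_derive_mult (K := C_AbsRing) F G z a b HF HG Cmult_comm).
Qed.

Lemma is_cderive_comp F G z a b :
  is_cderive G z b -> is_cderive F (G z) a -> is_cderive (fun y => F (G y)) z (b * a)%C.
Proof.
  rewrite <- is_cderive_iff_AbsRing, <- !is_cderive_iff. intros HG HF.
  exact (is_derive_comp (K := C_AbsRing) (V := C_NormedModule) F G z a b HF HG).
Qed.

Lemma is_cderive_const (c z : C) : is_cderive (fun _ => c) z 0%C.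
Proof. apply is_cderive_iff. apply (is_derive_const (K := C_AbsRing) (V := C_NormedModule)). Qed.

Lemma is_cderive_id (z : C) : is_cderive (fun y => y) z 1%C.
Proof. apply is_cderive_iff_AbsRing. exact (is_derive_id (K := C_AbsRing) z). Qed.

Lemma is_cderive_scal F z a c : is_cderive F z a -> is_cderive (fun y => c * F y)%C z (c * a)%C.
Proof.
  intros H. apply (is_cderive_ext_val _ _ (0 * F z + c * a)%C); [ring|].
  exact (is_cderive_mult _ _ z _ _ (is_cderive_const c z) H).
Qed.

Lemma is_cderive_unique F z a b : is_cderive F z a -> is_cderive F z b -> a = b.
Proof.
  rewrite <- !is_cderive_iff. intros H1 H2.
  apply is_C_derive_unique in H1. apply is_C_derive_unique in H2. congruence.
Qed.

Lemma is_cderive_ext_ball F G z a r : Cmod z < r -> (forall y, Cmod y < r -> F y = G y) ->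
  is_cderive F z a -> is_cderive G z a.
Proof.
  intros Hz Heq H eps Heps. destruct (H eps Heps) as [d [Hd H']].
  exists (Rmin d (r - Cmod z)). split; [apply Rmin_pos; lra|]. intros y Hy.
  assert (Cmod y < r).
  { pose proof (Cmod_ge_Cmod_minus y z). pose proof (Rmin_r d (r - Cmod z)). lra. }
  rewrite <- (Heq y), <- (Heq z) by auto. apply H'. eapply Rlt_le_trans; [exact Hy|apply Rmin_l].
Qed.

Lemma is_cderive_inv (z : C) : z <> 0%C -> is_cderive (fun y => / y)%C z (- / (z * z))%C.
Proof.
  intros Hz eps Heps. set (m := Cmod z).
  assert (Hm : 0 < m) by (apply Cmod_gt_0; auto).
  exists (Rmin (m / 2) (eps * (m * m * m) / 2)). split.
  { apply Rmin_pos; [lra|]. assert (0 < m * m * m) by (repeat apply Rmult_lt_0_compat; lra).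
    apply Rdiv_lt_0_compat; [apply Rmult_lt_0_compat|]; lra. }
  intros y Hy. set (u := Cmod (y - z)). assert (Hu : 0 <= u) by apply Cmod_ge_0.
  assert (A1 : u < m / 2) by (eapply Rlt_le_trans; [exact Hy| apply Rmin_l]).
  assert (A2 : u < eps * (m * m * m) / 2) by (eapply Rlt_le_trans; [exact Hy| apply Rmin_r]).
  assert (Hy1 : m / 2 <= Cmod y).
  { pose proof (Cmod_ge_Cmod_minus z y). rewrite Cmod_minus_sym in H. fold u m in H. lra. }
  assert (Hy0 : y <> 0%C) by (intro E; subst y; rewrite Cmod_0 in Hy1; lra).
  replace (/ y - / z - - / (z * z) * (y - z))%C with ((y - z) * (y - z) / (y * (z * z)))%C
    by (field; auto).
  rewrite Cmod_div by (repeat apply Cmult_neq_0; auto).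
  rewrite !Cmod_mult. fold m u.
  assert (Hm3 : 0 < m / 2 * (m * m)) by (repeat apply Rmult_lt_0_compat; lra).
  apply Rle_trans with (u * u / (m / 2 * (m * m))).
  { unfold Rdiv. apply Rmult_le_compat_l; [nra|]. apply Rinv_le_contravar; auto.
    apply Rmult_le_compat_r; nra. }
  apply (Rmult_le_reg_r (m / 2 * (m * m))); auto.
  replace (u * u / (m / 2 * (m * m)) * (m / 2 * (m * m))) with (u * u) by (field; lra).
  replace (eps * u * (m / 2 * (m * m))) with (u * (eps * (m * m * m) / 2)) by field.
  apply Rmult_le_compat_l; lra.
Qed.

Lemma is_cderive_ccont F z l : is_cderive F z l -> ccont F z.
Proof.
  intros H eps Heps. destruct (H 1 ltac:(lra)) as [d [Hd H']].
  pose proof (Cmod_ge_0 l).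
  exists (Rmin d (eps / (2 + Cmod l))).
  split; [apply Rmin_pos; auto; apply Rdiv_lt_0_compat; lra|].
  intros y Hy. pose proof (Cmod_ge_0 (y - z)%C).
  assert (A2 : Cmod (y - z) * (2 + Cmod l) < eps).
  { apply (Rmult_lt_reg_r (/ (2 + Cmod l))); [apply Rinv_0_lt_compat; lra|].
    rewrite Rmult_assoc, Rinv_r, Rmult_1_r by lra. eapply Rlt_le_trans; [exact Hy|apply Rmin_r]. }
  specialize (H' y (Rlt_le_trans _ _ _ Hy (Rmin_l _ _))).
  replace (F y - F z)%C with ((F y - F z - l * (y - z)) + l * (y - z))%C by ring.
  eapply Rle_lt_trans; [apply Cmod_triangle|]. rewrite Cmod_mult. nra.
Qed.

Lemma ccont_id (z : C) : ccont (fun y => y) z.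
Proof. eapply is_cderive_ccont. apply is_cderive_id. Qed.

Definition is_pderive (p : R -> C) (t : R) (v : C) : Prop :=
  forall eps, 0 < eps -> exists d, 0 < d /\
    forall s, Rabs (s - t) < d -> Cmod (p s - p t - RtoC (s - t) * v) <= eps * Rabs (s - t).

Lemma is_derive_R_iff (f : R -> R) x l : is_derive f x l <->
  (forall eps, 0 < eps -> exists d, 0 < d /\
    forall y, Rabs (y - x) < d -> Rabs (f y - f x - (y - x) * l) <= eps * Rabs (y - x)).
Proof.
  unfold is_derive, filterdiff. split.
  - intros [_ H] eps Heps.
    destruct (H x (fun P HP => HP) (mkposreal eps Heps)) as [d Hd].
    exists d. split; [apply cond_pos|]. intros y Hy. apply (Hd y). exact Hy.
  - intros H. split; [apply is_linear_scal_l|].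
    intros x' Hx.
    assert (x = x') as <- by
      (apply (is_filter_lim_locally_unique (K := R_AbsRing) (V := AbsRing_NormedModule R_AbsRing)); exact Hx).
    intros [eps Heps]. destruct (H eps Heps) as [d [Hd Hd']].
    exists (mkposreal d Hd). intros y Hy. apply Hd'. exact Hy.
Qed.

Lemma is_pderive_fst p t v : is_pderive p t v -> is_derive (fun s => fst (p s)) t (fst v).
Proof.
  intros H. apply is_derive_R_iff. intros eps Heps. destruct (H eps Heps) as [d [Hd H']].
  exists d; split; auto. intros y Hy.
  eapply Rle_trans; [|exact (H' y Hy)]. eapply Rle_trans; [|apply fst_le_Cmod].
  simpl. right. f_equal. ring.
Qed.

Lemma is_pderive_snd p t v : is_pderive p t v -> is_derive (fun s => snd (p s)) t (snd v).
Proof.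
  intros H. apply is_derive_R_iff. intros eps Heps. destruct (H eps Heps) as [d [Hd H']].
  exists d; split; auto. intros y Hy.
  eapply Rle_trans; [|exact (H' y Hy)]. eapply Rle_trans; [|apply snd_le_Cmod].
  simpl. right. f_equal. ring.
Qed.

Lemma is_pderive_of_components (p : R -> C) (t : R) (v : C) :
  is_derive (fun s => fst (p s)) t (fst v) -> is_derive (fun s => snd (p s)) t (snd v) ->
  is_pderive p t v.
Proof.
  intros H1 H2 eps Heps. rewrite is_derive_R_iff in H1, H2.
  destruct (H1 (eps/2) ltac:(lra)) as [d1 [Hd1 H1']].
  destruct (H2 (eps/2) ltac:(lra)) as [d2 [Hd2 H2']].
  exists (Rmin d1 d2). split; [apply Rmin_pos; auto|]. intros s Hs.
  specialize (H1' s (Rlt_le_trans _ _ _ Hs (Rmin_l _ _))).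
  specialize (H2' s (Rlt_le_trans _ _ _ Hs (Rmin_r _ _))).
  eapply Rle_trans; [apply Cmod_le_Rabs_fst_snd|]. simpl.
  match goal with |- Rabs ?a + Rabs ?b <= _ =>
    replace a with (fst (p s) - fst (p t) - (s - t) * fst v) by ring;
    replace b with (snd (p s) - snd (p t) - (s - t) * snd v) by ring end.
  lra.
Qed.

Lemma is_pderive_ext (p q : R -> C) t v : (forall s, p s = q s) -> is_pderive p t v -> is_pderive q t v.
Proof.
  intros E H eps Heps. destruct (H eps Heps) as [d [Hd H']]. exists d; split; auto.
  intros s Hs. rewrite <- !E. auto.
Qed.

Lemma is_pderive_ext_val (p : R -> C) t v v' : v = v' -> is_pderive p t v -> is_pderive p t v'.
Proof. intros ->; auto. Qed.

Lemma is_pderive_pcont p t v : is_pderive p t v -> pcont p t.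
Proof.
  intros H eps Heps. destruct (H 1 ltac:(lra)) as [d [Hd H']].
  pose proof (Cmod_ge_0 v).
  exists (Rmin d (eps / (2 + Cmod v))).
  split; [apply Rmin_pos; auto; apply Rdiv_lt_0_compat; lra|].
  intros s Hs. pose proof (Rabs_pos (s - t)).
  assert (A2 : Rabs (s - t) * (2 + Cmod v) < eps).
  { apply (Rmult_lt_reg_r (/ (2 + Cmod v))); [apply Rinv_0_lt_compat; lra|].
    rewrite Rmult_assoc, Rinv_r, Rmult_1_r by lra. eapply Rlt_le_trans; [exact Hs|apply Rmin_r]. }
  specialize (H' s (Rlt_le_trans _ _ _ Hs (Rmin_l _ _))).
  replace (p s - p t)%C with ((p s - p t - RtoC (s - t) * v) + RtoC (s - t) * v)%C by ring.
  eapply Rle_lt_trans; [apply Cmod_triangle|]. rewrite Cmod_mult, Cmod_R. nra.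
Qed.

Lemma is_pderive_comp (F : C -> C) (p : R -> C) t l v :
  is_cderive F (p t) l -> is_pderive p t v -> is_pderive (fun s => F (p s)) t (l * v)%C.
Proof.
  intros HF Hp eps Heps. set (L := Cmod l). set (V := Cmod v).
  assert (HL : 0 <= L) by apply Cmod_ge_0. assert (HV : 0 <= V) by apply Cmod_ge_0.
  set (e1 := eps / (2 * (V + 1))). assert (He1 : 0 < e1) by (apply Rdiv_lt_0_compat; lra).
  set (e2 := Rmin 1 (eps / (2 * (L + 1)))).
  assert (He2 : 0 < e2) by (apply Rmin_pos; [lra|]; apply Rdiv_lt_0_compat; lra).
  assert (He2a : e2 <= 1) by apply Rmin_l.
  assert (He2b : L * e2 <= eps / 2).
  { apply Rle_trans with (L * (eps / (2 * (L + 1)))); [apply Rmult_le_compat_l; [lra|apply Rmin_r]|].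
    apply Rmult_le_reg_r with (2 * (L + 1)); [lra|]. field_simplify; [|lra]. nra. }
  destruct (HF e1 He1) as [dF [HdF HF']].
  destruct (Hp e2 He2) as [dp [Hdp Hp']].
  exists (Rmin dp (dF / (1 + V))). split; [apply Rmin_pos; auto; apply Rdiv_lt_0_compat; lra|].
  intros s Hs. pose proof (Rabs_pos (s - t)).
  specialize (Hp' s (Rlt_le_trans _ _ _ Hs (Rmin_l _ _))).
  assert (Hps : Cmod (p s - p t) <= (1 + V) * Rabs (s - t)).
  { replace (p s - p t)%C with ((p s - p t - RtoC (s - t) * v) + RtoC (s - t) * v)%C by ring.
    eapply Rle_trans; [apply Cmod_triangle|]. rewrite Cmod_mult, Cmod_R. fold V. nra. }
  assert (Hps2 : Cmod (p s - p t) < dF).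
  { assert (Rabs (s - t) * (1 + V) < dF); [|nra].
    apply (Rmult_lt_reg_r (/ (1 + V))); [apply Rinv_0_lt_compat; lra|].
    rewrite Rmult_assoc, Rinv_r, Rmult_1_r by lra. eapply Rlt_le_trans; [exact Hs|apply Rmin_r]. }
  specialize (HF' (p s) Hps2).
  replace (F (p s) - F (p t) - RtoC (s - t) * (l * v))%C with
    ((F (p s) - F (p t) - l * (p s - p t)) + l * (p s - p t - RtoC (s - t) * v))%C by ring.
  eapply Rle_trans; [apply Cmod_triangle|]. rewrite Cmod_mult. fold L.
  assert (e1 * Cmod (p s - p t) <= eps / 2 * Rabs (s - t)).
  { apply Rle_trans with (e1 * ((1 + V) * Rabs (s - t))); [apply Rmult_le_compat_l; lra|].
    unfold e1. right. field. lra. }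
  assert (L * Cmod (p s - p t - RtoC (s - t) * v) <= L * (e2 * Rabs (s - t)))
    by (apply Rmult_le_compat_l; lra).
  assert (L * (e2 * Rabs (s - t)) <= eps / 2 * Rabs (s - t))
    by (rewrite <- Rmult_assoc; apply Rmult_le_compat_r; lra).
  lra.
Qed.

Lemma is_pderive_affine (a b : C) t : is_pderive (fun s => a + RtoC s * b)%C t b.
Proof.
  intros eps Heps. exists 1. split; [lra|]. intros s Hs.
  replace (a + RtoC s * b - (a + RtoC t * b) - RtoC (s - t) * b)%C with (RtoC 0)
    by (rewrite RtoC_minus; ring).
  rewrite Cmod_0. apply Rmult_le_pos; [lra|apply Rabs_pos].
Qed.

Lemma is_pderive_scal (p : R -> C) t v c : is_pderive p t v -> is_pderive (fun s => c * p s)%C t (c * v)%C.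
Proof.
  intros H. apply (is_pderive_ext_val _ _ (c * 1 * v)%C); [ring|].
  apply (is_pderive_comp (fun y => c * y)%C); auto.
  apply is_cderive_scal, is_cderive_id.
Qed.

Lemma is_pderive_scal_r (p : R -> C) t v c : is_pderive p t v -> is_pderive (fun s => p s * c)%C t (v * c)%C.
Proof.
  intros H. rewrite Cmult_comm. eapply is_pderive_ext; [|apply is_pderive_scal, H].
  intros; apply Cmult_comm.
Qed.

Lemma is_pderive_plus_const (p : R -> C) t v c : is_pderive p t v -> is_pderive (fun s => p s + c)%C t v.
Proof.
  intros H eps Heps. destruct (H eps Heps) as [d [Hd H']]. exists d; split; auto.
  intros s Hs. replace (p s + c - (p t + c) - RtoC (s - t) * v)%C with (p s - p t - RtoC (s - t) * v)%C by ring.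
  auto.
Qed.

Lemma is_pderive_zero_const (P : R -> C) a b :
  a < b -> (forall t, a <= t <= b -> is_pderive P t 0%C) -> P a = P b.
Proof.
  intros Hab H. apply injective_projections;
  [apply (eq_is_derive (V := R_NormedModule) (fun s => fst (P s)))
  |apply (eq_is_derive (V := R_NormedModule) (fun s => snd (P s)))]; auto; intros t Ht;
  [apply (is_pderive_fst P t 0%C) | apply (is_pderive_snd P t 0%C)]; auto.
Qed.

Lemma pcont_RtoC t : pcont (fun s => RtoC s) t.
Proof.
  apply (is_pderive_pcont _ _ 1%C). eapply is_pderive_ext; [|apply (is_pderive_affine 0 1 t)].
  intros s; simpl. ring.
Qed.

Lemma pcont_inv (p : R -> C) t : pcont p t -> p t <> 0%C -> pcont (fun s => / p s)%C t.
Proof.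
  intros Hp H0. apply (cont_wrt_comp _ (fun y => / y)%C); auto.
  eapply is_cderive_ccont. apply is_cderive_inv. auto.
Qed.

Definition cis (t : R) : C := (cos t, sin t).

Definition circle (r t : R) : C := (RtoC r * cis t)%C.

Lemma is_pderive_cis t : is_pderive cis t (Ci * cis t)%C.
Proof.
  apply is_pderive_of_components.
  - replace (fst (Ci * cis t)%C) with (- sin t) by (simpl; ring). apply is_derive_cos.
  - replace (snd (Ci * cis t)%C) with (cos t) by (simpl; ring). apply is_derive_sin.
Qed.

Lemma is_pderive_circle r t : is_pderive (circle r) t (Ci * circle r t)%C.
Proof.
  unfold circle. apply (is_pderive_ext_val _ _ (RtoC r * (Ci * cis t))%C); [ring|].
  apply is_pderive_scal, is_pderive_cis.
Qed.

Lemma pcont_circle r t : pcont (circle r) t.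
Proof. eapply is_pderive_pcont. apply is_pderive_circle. Qed.

Lemma Cmod_circle r t : 0 <= r -> Cmod (circle r t) = r.
Proof.
  intros Hr. unfold circle, cis. rewrite Cmod_mult, Cmod_R, Rabs_pos_eq by lra.
  unfold Cmod; simpl. pose proof (sin2_cos2 t). unfold Rsqr in H.
  replace (cos t * (cos t * 1) + sin t * (sin t * 1)) with 1 by lra. rewrite sqrt_1. ring.
Qed.

Lemma circle_2PI r : circle r (2 * PI) = circle r 0.
Proof. unfold circle, cis. rewrite cos_2PI, sin_2PI, cos_0, sin_0. reflexivity. Qed.

Lemma Cmod_circle_minus_ge r t y : 0 <= r -> r - Cmod y <= Cmod (circle r t - y).
Proof. intros Hr. rewrite <- (Cmod_circle r t) at 1 by auto. apply Cmod_ge_Cmod_minus. Qed.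

Lemma circle_minus_neq_0 r t y : Cmod y < r -> (circle r t - y)%C <> 0%C.
Proof.
  intros H E. pose proof (Cmod_circle_minus_ge r t y). rewrite E, Cmod_0 in H0.
  pose proof (Cmod_ge_0 y). lra.
Qed.

Lemma circle_neq_0 r t : 0 < r -> circle r t <> 0%C.
Proof. intros H E. pose proof (Cmod_circle r t). rewrite E, Cmod_0 in H0. lra. Qed.

(** * Integrals along paths *)

Definition is_CInt (f : R -> C) (a b : R) (l : C) : Prop :=
  is_RInt (fun t => fst (f t)) a b (fst l) /\ is_RInt (fun t => snd (f t)) a b (snd l).

Definition CInt (f : R -> C) (a b : R) : C :=
  (RInt (fun t => fst (f t)) a b, RInt (fun t => snd (f t)) a b).

Definition re_im_comb (al be : R) (c : C) : R := al * fst c + be * snd c.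

Lemma re_im_comb_minus al be (c c' : C) : re_im_comb al be c - re_im_comb al be c' = re_im_comb al be (c - c')%C.
Proof. unfold re_im_comb; simpl; ring. Qed.

Lemma Rabs_re_im_comb_le al be (c : C) : Rabs (re_im_comb al be c) <= (Rabs al + Rabs be) * Cmod c.
Proof.
  unfold re_im_comb. eapply Rle_trans; [apply Rabs_triang|]. rewrite !Rabs_mult.
  pose proof (fst_le_Cmod c). pose proof (snd_le_Cmod c).
  pose proof (Rabs_pos al). pose proof (Rabs_pos be).
  assert (Rabs al * Rabs (fst c) <= Rabs al * Cmod c) by (apply Rmult_le_compat_l; auto).
  assert (Rabs be * Rabs (snd c) <= Rabs be * Cmod c) by (apply Rmult_le_compat_l; auto).
  lra.
Qed.

Lemma re_im_comb_le_Cmod al be (c : C) : al * al + be * be = 1 -> re_im_comb al be c <= Cmod c.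
Proof.
  intros Hu. unfold re_im_comb.
  apply Rsqr_incr_0_var; [|apply Cmod_ge_0]. unfold Rsqr. rewrite Cmod_mult_self.
  assert (0 <= (al * snd c - be * fst c) * (al * snd c - be * fst c)) by apply Rle_0_sqr.
  nra.
Qed.

Lemma is_CInt_re_im_comb al be f a b l :
  is_CInt f a b l -> is_RInt (fun t => re_im_comb al be (f t)) a b (re_im_comb al be l).
Proof.
  intros [H1 H2]. exact (is_RInt_plus _ _ a b _ _ (is_RInt_scal _ a b al _ H1) (is_RInt_scal _ a b be _ H2)).
Qed.

Lemma is_CInt_unique f a b l : is_CInt f a b l -> CInt f a b = l.
Proof.
  intros [H1 H2]. unfold CInt.
  rewrite (is_RInt_unique (V := R_CompleteNormedModule) _ _ _ _ H1), (is_RInt_unique (V := R_CompleteNormedModule) _ _ _ _ H2).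
  destruct l; reflexivity.
Qed.

Lemma is_CInt_CInt (f : R -> C) a b : (forall t, Rmin a b <= t <= Rmax a b -> pcont f t) ->
  is_CInt f a b (CInt f a b).
Proof.
  intros H. split; simpl; apply (RInt_correct (V := R_CompleteNormedModule));
  apply ex_RInt_continuous; intros; [apply pcont_fst_continuous|apply pcont_snd_continuous]; auto.
Qed.

Lemma is_CInt_ext (f g : R -> C) a b l : (forall t, Rmin a b <= t <= Rmax a b -> f t = g t) ->
  is_CInt f a b l -> is_CInt g a b l.
Proof.
  intros E [H1 H2]. split.
  - apply (is_RInt_ext (fun t => fst (f t))); auto. intros x Hx; rewrite E; auto; lra.
  - apply (is_RInt_ext (fun t => snd (f t))); auto. intros x Hx; rewrite E; auto; lra.
Qed.

Lemma is_CInt_plus (f g : R -> C) a b lf lg : is_CInt f a b lf -> is_CInt g a b lg ->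
  is_CInt (fun t => f t + g t)%C a b (lf + lg)%C.
Proof.
  intros [H1 H2] [H3 H4]. split.
  - exact (is_RInt_plus _ _ a b _ _ H1 H3).
  - exact (is_RInt_plus _ _ a b _ _ H2 H4).
Qed.

Lemma is_CInt_scal (c : C) (f : R -> C) a b l : is_CInt f a b l ->
  is_CInt (fun t => c * f t)%C a b (c * l)%C.
Proof.
  intros [H1 H2]. split.
  - exact (is_RInt_minus _ _ a b _ _ (is_RInt_scal _ a b (fst c) _ H1) (is_RInt_scal _ a b (snd c) _ H2)).
  - exact (is_RInt_plus _ _ a b _ _ (is_RInt_scal _ a b (fst c) _ H2) (is_RInt_scal _ a b (snd c) _ H1)).
Qed.

Lemma is_CInt_minus (f g : R -> C) a b lf lg : is_CInt f a b lf -> is_CInt g a b lg ->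
  is_CInt (fun t => f t - g t)%C a b (lf - lg)%C.
Proof.
  intros H1 H2. apply (is_CInt_ext (fun t => f t + (-1) * g t)%C); [intros; ring|].
  replace (lf - lg)%C with (lf + (-1) * lg)%C by ring.
  apply is_CInt_plus, is_CInt_scal; auto.
Qed.

Lemma is_CInt_const (c : C) a b : is_CInt (fun _ => c) a b (RtoC (b - a) * c)%C.
Proof.
  split; simpl.
  - replace ((b - a) * fst c - 0 * snd c) with (scal (b - a) (fst c)) by (cbn; ring).
    apply (is_RInt_const (V := R_NormedModule)).
  - replace ((b - a) * snd c + 0 * fst c) with (scal (b - a) (snd c)) by (cbn; ring).
    apply (is_RInt_const (V := R_NormedModule)).
Qed.

(* Rotating [l] onto the positive real axis turns [Cmod l] into the integral of a real part. *)
Lemma Cmod_is_CInt_le (f : R -> C) (g : R -> R) a b l lg : a <= b -> is_CInt f a b l ->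
  is_RInt g a b lg -> (forall t, a <= t <= b -> Cmod (f t) <= g t) -> Cmod l <= lg.
Proof.
  intros Hab Hf Hg Hb.
  destruct (Ceq_dec l 0%C) as [->|Hl].
  - rewrite Cmod_0. apply (is_RInt_le (fun _ => 0) g a b 0 lg Hab); auto.
    + pose proof (is_RInt_const (V := R_NormedModule) a b 0) as H0.
      change (scal (b - a) 0) with ((b - a) * 0) in H0. rewrite Rmult_0_r in H0. exact H0.
    + intros x Hx. eapply Rle_trans; [apply Cmod_ge_0|apply Hb; lra].
  - assert (Hm : 0 < Cmod l) by (apply Cmod_gt_0; auto).
    set (al := fst l / Cmod l). set (be := snd l / Cmod l).
    assert (Hunit : al * al + be * be = 1).
    { unfold al, be.
      replace (fst l / Cmod l * (fst l / Cmod l) + snd l / Cmod l * (snd l / Cmod l))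
        with ((fst l * fst l + snd l * snd l) / (Cmod l * Cmod l)) by (field; lra).
      rewrite <- Cmod_mult_self. field. lra. }
    replace (Cmod l) with (re_im_comb al be l).
    2:{ unfold re_im_comb, al, be.
        replace (fst l / Cmod l * fst l + snd l / Cmod l * snd l)
          with ((fst l * fst l + snd l * snd l) / Cmod l) by (field; lra).
        rewrite <- Cmod_mult_self. field. lra. }
    apply (is_RInt_le _ g a b _ lg Hab (is_CInt_re_im_comb al be _ _ _ _ Hf) Hg).
    intros x Hx. eapply Rle_trans; [apply re_im_comb_le_Cmod; auto|apply Hb; lra].
Qed.

Lemma Cmod_is_CInt_le_const (f : R -> C) a b l M : a <= b -> is_CInt f a b l ->
  (forall t, a <= t <= b -> Cmod (f t) <= M) -> Cmod l <= (b - a) * M.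
Proof.
  intros Hab H Hb. eapply Cmod_is_CInt_le; [exact Hab|exact H| |exact Hb].
  apply (is_RInt_const (V := R_NormedModule)).
Qed.

Lemma is_CInt_derive (P p : R -> C) a b : a <= b ->
  (forall t, a <= t <= b -> is_pderive P t (p t)) -> (forall t, a <= t <= b -> pcont p t) ->
  is_CInt p a b (P b - P a)%C.
Proof.
  intros Hab HD Hc. split.
  - apply (is_RInt_derive (V := R_CompleteNormedModule) (fun s => fst (P s)) (fun s => fst (p s)));
      intros x Hx; rewrite Rmin_left, Rmax_right in Hx by auto.
    + apply is_pderive_fst. auto.
    + apply pcont_fst_continuous. auto.
  - apply (is_RInt_derive (V := R_CompleteNormedModule) (fun s => snd (P s)) (fun s => snd (p s)));
      intros x Hx; rewrite Rmin_left, Rmax_right in Hx by auto.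
    + apply is_pderive_snd. auto.
    + apply pcont_snd_continuous. auto.
Qed.

Lemma is_CInt_closed_loop (P p : R -> C) a b : a <= b -> P a = P b ->
  (forall t, a <= t <= b -> is_pderive P t (p t)) -> (forall t, a <= t <= b -> pcont p t) ->
  is_CInt p a b 0%C.
Proof.
  intros Hab Hper HD Hc.
  assert (E : (P b - P a)%C = 0%C) by (rewrite Hper; ring).
  rewrite <- E. apply is_CInt_derive; auto.
Qed.

(** * Cauchy's integral formula *)

Lemma two_PI_pos : 0 < 2 * PI.
Proof. pose proof PI_RGT_0. lra. Qed.

Definition cauchy_kernel (r : R) (phi : R -> C) (m : nat) (z : C) (t : R) : C :=
  (phi t * (/ (circle r t - z)) ^ m)%C.

(* Since dw = i w dt on [w = circle r t], the density [phi t = F w * w] gives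
   cauchy_transform r phi m z = i⁻¹ ∮_{|w|=r} F(w) / (w - z)^m dw. *)
Definition cauchy_transform (r : R) (phi : R -> C) (m : nat) (z : C) : C :=
  CInt (cauchy_kernel r phi m z) 0 (2 * PI).

Lemma pcont_inv_circle_minus r z t : Cmod z < r -> pcont (fun t => / (circle r t - z))%C t.
Proof.
  intros Hz. apply pcont_inv; [|apply circle_minus_neq_0; auto].
  apply (cont_wrt_plus _ (circle r) (fun _ => - z)%C); [apply pcont_circle|apply cont_wrt_const].
Qed.

Lemma pcont_cauchy_kernel r phi m z t : (forall s, pcont phi s) -> Cmod z < r ->
  pcont (cauchy_kernel r phi m z) t.
Proof.
  intros Hp Hz. apply cont_wrt_mult; auto. apply cont_wrt_pow, pcont_inv_circle_minus; auto.
Qed.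

Lemma is_CInt_cauchy_transform r phi m z : (forall s, pcont phi s) -> Cmod z < r ->
  is_CInt (cauchy_kernel r phi m z) 0 (2 * PI) (cauchy_transform r phi m z).
Proof. intros. apply is_CInt_CInt. intros. apply pcont_cauchy_kernel; auto. Qed.

(* For u = 1/(w-z), u' = 1/(w-y) and δ = y - z one has u' - u = δ u u'. *)
Lemma Cpow_difference_bound (u u' delta : C) (B : R) (m : nat) :
  0 <= B -> Cmod u <= B -> Cmod u' <= B -> (u' - u = delta * u * u')%C ->
  Cmod (u' ^ m - u ^ m - delta * RtoC (INR m) * u ^ S m)%C
    <= INR m * INR m * B ^ (m + 2) * (Cmod delta * Cmod delta).
Proof.
  intros HB Hu Hu' Hd. induction m as [|m IH].
  - simpl. replace (1 - 1 - delta * 0 * (u * 1))%C with (RtoC 0) by ring. rewrite Cmod_0. lra.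
  - set (E := (u' ^ m - u ^ m - delta * RtoC (INR m) * u ^ S m)%C) in *.
    replace (u' ^ S m - u ^ S m - delta * RtoC (INR (S m)) * u ^ S (S m))%C with
      (u' * E + delta * delta * RtoC (INR (S m)) * u ^ S (S m) * u')%C.
    2:{ unfold E. rewrite S_INR, RtoC_plus.
        assert (HX : (u' - u - delta * u * u')%C = 0%C) by (rewrite Hd; ring).
        match goal with |- ?L = ?R =>
          transitivity (R - (u' - u - delta * u * u') * (u ^ m + delta * (RtoC (INR m) + 1) * u ^ S m))%C end.
        - simpl. ring.
        - rewrite HX. ring. }
    eapply Rle_trans; [apply Cmod_triangle|].
    rewrite !Cmod_mult, Cmod_R, Rabs_pos_eq by apply pos_INR. rewrite !Cmod_pow.
    pose proof (Cmod_ge_0 E). pose proof (Cmod_ge_0 delta). pose proof (Cmod_ge_0 u). pose proof (pos_INR m). pose proof (Cmod_ge_0 u').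
    assert (Hum : Cmod u ^ S (S m) <= B ^ S (S m)) by (apply pow_incr; lra).
    replace (S m + 2)%nat with (S (S (S m))) by lia. replace (m + 2)%nat with (S (S m)) in IH by lia.
    rewrite S_INR. set (D := Cmod delta * Cmod delta) in *. assert (0 <= D) by (unfold D; nra).
    set (BB := B ^ S (S m)) in *. assert (0 <= BB) by (apply pow_le; auto).
    assert (Cmod u' * Cmod E <= B * (INR m * INR m * BB * D)) by (apply Rmult_le_compat; auto).
    assert (D * (INR m + 1) * Cmod u ^ S (S m) * Cmod u' <= D * (INR m + 1) * BB * B).
    { apply Rmult_le_compat; auto; [|apply Rmult_le_compat_l; nra].
      apply Rmult_le_pos; [nra|apply pow_le; lra]. }
    replace (B ^ S (S (S m))) with (B * BB) by (unfold BB; simpl; ring).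
    assert (0 <= B * BB * D) by (apply Rmult_le_pos; [apply Rmult_le_pos|]; lra).
    nra.
Qed.

Lemma cauchy_kernel_taylor_bound r phi m z y t : Cmod (y - z) < (r - Cmod z) / 2 ->
  Cmod (cauchy_kernel r phi m y t - cauchy_kernel r phi m z t
        - INR m * (y - z) * cauchy_kernel r phi (S m) z t)%C
  <= Cmod (phi t) * (INR m * INR m * (2 / (r - Cmod z)) ^ (m + 2) * (Cmod (y - z) * Cmod (y - z))).
Proof.
  intros Hy. set (d0 := (r - Cmod z) / 2) in *.
  assert (Hd0 : 0 < d0) by (pose proof (Cmod_ge_0 (y - z)%C); lra).
  pose proof (Cmod_ge_Cmod_minus y z). pose proof (Cmod_ge_0 z).
  pose proof (Cmod_circle_minus_ge r t z ltac:(unfold d0 in *; lra)).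
  pose proof (Cmod_circle_minus_ge r t y ltac:(unfold d0 in *; lra)).
  assert (Hnz : (circle r t - z)%C <> 0%C) by (apply circle_minus_neq_0; unfold d0 in *; lra).
  assert (Hny : (circle r t - y)%C <> 0%C) by (apply circle_minus_neq_0; unfold d0 in *; lra).
  set (u := (/ (circle r t - z))%C). set (u' := (/ (circle r t - y))%C).
  replace (cauchy_kernel r phi m y t - cauchy_kernel r phi m z t
           - INR m * (y - z) * cauchy_kernel r phi (S m) z t)%C
    with (phi t * (u' ^ m - u ^ m - (y - z) * INR m * u ^ S m))%C
    by (unfold cauchy_kernel; fold u u'; ring).
  rewrite Cmod_mult. apply Rmult_le_compat_l; [apply Cmod_ge_0|].
  replace (2 / (r - Cmod z)) with (/ d0) by (unfold d0 in *; field; lra).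
  apply Cpow_difference_bound; [apply Rlt_le, Rinv_0_lt_compat; lra| | |].
  - apply Cmod_inv_le; auto. unfold d0 in *; lra.
  - apply Cmod_inv_le; auto. unfold d0 in *; lra.
  - unfold u, u'. field. auto.
Qed.

Lemma is_cderive_cauchy_transform r phi m z : (forall s, pcont phi s) -> Cmod z < r ->
  is_cderive (cauchy_transform r phi m) z (INR m * cauchy_transform r phi (S m) z)%C.
Proof.
  intros Hp Hz.
  destruct (pcont_bounded phi 0 (2 * PI)) as [M [HM HMb]]; [pose proof two_PI_pos; lra|auto|].
  set (B := 2 / (r - Cmod z)). assert (HB : 0 < B) by (apply Rdiv_lt_0_compat; lra).
  set (K := 2 * PI * (M * (INR m * INR m * B ^ (m + 2)))).
  assert (HK : 0 <= K).
  { pose proof two_PI_pos. pose proof (pos_INR m). pose proof (pow_le B (m + 2)).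
    unfold K. apply Rmult_le_pos; [lra|]. apply Rmult_le_pos; [lra|]. apply Rmult_le_pos; [nra|lra]. }
  intros eps Heps.
  exists (Rmin ((r - Cmod z) / 2) (eps / (K + 1))).
  split; [apply Rmin_pos; [lra|apply Rdiv_lt_0_compat; lra]|].
  intros y Hy. set (delta := (y - z)%C) in *.
  assert (A1 : Cmod delta < (r - Cmod z) / 2) by (eapply Rlt_le_trans; [exact Hy|apply Rmin_l]).
  assert (A2 : Cmod delta * (K + 1) < eps).
  { apply (Rmult_lt_reg_r (/ (K + 1))); [apply Rinv_0_lt_compat; lra|].
    rewrite Rmult_assoc, Rinv_r, Rmult_1_r by lra. eapply Rlt_le_trans; [exact Hy|apply Rmin_r]. }
  assert (Hyr : Cmod y < r).
  { assert (Cmod y - Cmod z <= Cmod delta) by apply Cmod_ge_Cmod_minus. pose proof (Cmod_ge_0 z). lra. }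
  pose proof (is_CInt_minus _ _ _ _ _ _
    (is_CInt_minus _ _ _ _ _ _ (is_CInt_cauchy_transform r phi m y Hp Hyr)
                                (is_CInt_cauchy_transform r phi m z Hp Hz))
    (is_CInt_scal (INR m * delta)%C _ _ _ _ (is_CInt_cauchy_transform r phi (S m) z Hp Hz))) as HI.
  replace (cauchy_transform r phi m y - cauchy_transform r phi m z
           - INR m * cauchy_transform r phi (S m) z * delta)%C
    with (cauchy_transform r phi m y - cauchy_transform r phi m z
          - INR m * delta * cauchy_transform r phi (S m) z)%C by ring.
  pose proof (Cmod_ge_0 delta).
  eapply Rle_trans.
  - apply (Cmod_is_CInt_le_const _ 0 (2 * PI) _
             (M * (INR m * INR m * B ^ (m + 2) * (Cmod delta * Cmod delta)))
             ltac:(pose proof two_PI_pos; lra) HI).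
    intros t Ht. eapply Rle_trans; [apply cauchy_kernel_taylor_bound; auto|].
    apply Rmult_le_compat_r; auto.
    pose proof (pos_INR m). pose proof (pow_le B (m + 2)). fold B.
    apply Rmult_le_pos; [|nra]. apply Rmult_le_pos; [nra|lra].
  - replace ((2 * PI - 0) * (M * (INR m * INR m * B ^ (m + 2) * (Cmod delta * Cmod delta))))
      with (K * Cmod delta * Cmod delta) by (unfold K; ring).
    nra.
Qed.

Lemma cauchy_transform_circle_2 r y : Cmod y < r -> cauchy_transform r (circle r) 2 y = 0%C.
Proof.
  intros Hy. pose proof (Cmod_ge_0 y).
  apply is_CInt_unique.
  apply (is_CInt_ext (fun t => Ci * (- Ci * cauchy_kernel r (circle r) 2 y t))%C).
  { intros t _. transitivity (- (Ci * Ci) * cauchy_kernel r (circle r) 2 y t)%C; [ring|].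
    rewrite Ci_mult_Ci. ring. }
  rewrite <- (Cmult_0_r Ci). apply is_CInt_scal.
  apply (is_CInt_closed_loop (fun t => / (circle r t - y))%C); [pose proof two_PI_pos; lra|now rewrite circle_2PI|..].
  - intros t _. assert (Hn : (circle r t - y)%C <> 0%C) by (apply circle_minus_neq_0; auto).
    apply (is_pderive_ext_val _ _ ((- / ((circle r t - y) * (circle r t - y))) * (Ci * circle r t))%C).
    { unfold cauchy_kernel. simpl. field. auto. }
    apply (is_pderive_comp (fun a => / a)%C (fun s => circle r s - y)%C).
    + apply is_cderive_inv. auto.
    + apply is_pderive_plus_const, is_pderive_circle.
  - intros t _. apply cont_wrt_mult; [apply cont_wrt_const|apply pcont_cauchy_kernel; auto].
    apply pcont_circle.
Qed.

(* The integral is constant along the segment from 0 to z, its derivative being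
   a multiple of [cauchy_transform_circle_2]. *)
Lemma cauchy_transform_circle_1 r z : Cmod z < r -> cauchy_transform r (circle r) 1 z = RtoC (2 * PI).
Proof.
  intros Hz. pose proof (Cmod_ge_0 z) as Hz0.
  assert (Hin : forall s, 0 <= s <= 1 -> Cmod (RtoC s * z)%C < r).
  { intros s Hs. rewrite Cmod_mult, Cmod_R, Rabs_pos_eq by lra. nra. }
  assert (E : cauchy_transform r (circle r) 1 (RtoC 0 * z)%C = cauchy_transform r (circle r) 1 (RtoC 1 * z)%C).
  { apply (is_pderive_zero_const (fun s => cauchy_transform r (circle r) 1 (RtoC s * z)%C)); [lra|].
    intros s Hs.
    apply (is_pderive_ext_val _ _ (INR 1 * cauchy_transform r (circle r) 2 (RtoC s * z) * z)%C).
    { rewrite cauchy_transform_circle_2 by auto. ring. }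
    apply (is_pderive_comp (cauchy_transform r (circle r) 1) (fun s => RtoC s * z)%C).
    - apply is_cderive_cauchy_transform; auto. intros; apply pcont_circle.
    - eapply is_pderive_ext; [|apply (is_pderive_affine 0 z s)]. intros; simpl; ring. }
  replace (RtoC 1 * z)%C with z in E by ring. rewrite <- E.
  replace (RtoC 0 * z)%C with (RtoC 0) by ring.
  apply is_CInt_unique.
  replace (RtoC (2 * PI)) with (RtoC (2 * PI - 0) * 1)%C by (rewrite Rminus_0_r; ring).
  eapply is_CInt_ext; [|apply is_CInt_const]. intros t _. unfold cauchy_kernel. simpl.
  replace (circle r t - 0)%C with (circle r t) by ring.
  field. apply circle_neq_0. lra.
Qed.

Lemma is_pderive_re_im_comb al be (p : R -> C) t v :
  is_pderive p t v -> is_derive (fun s => re_im_comb al be (p s)) t (re_im_comb al be v).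
Proof.
  intros H. unfold re_im_comb.
  apply (is_derive_plus (K := R_AbsRing) (V := R_NormedModule)
           (fun s => al * fst (p s)) (fun s => be * snd (p s)));
  apply is_derive_scal; [apply is_pderive_fst|apply is_pderive_snd]; auto.
Qed.

Lemma pcont2_continuity_2d al be (h : R * R -> C) u v :
  pcont2 h (u, v) -> continuity_2d_pt (fun a b => re_im_comb al be (h (a, b))) u v.
Proof.
  intros H [eps Heps]. set (K := Rabs al + Rabs be + 1).
  assert (HK : 0 < K) by (unfold K; pose proof (Rabs_pos al); pose proof (Rabs_pos be); lra).
  destruct (H (eps / K) ltac:(apply Rdiv_lt_0_compat; lra)) as [d [Hd H']].
  exists (mkposreal d Hd). intros a b Ha Hb. simpl.
  specialize (H' (a, b) ltac:(apply Rmax_lub_lt; auto)).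
  rewrite re_im_comb_minus. eapply Rle_lt_trans; [apply Rabs_re_im_comb_le|].
  apply Rle_lt_trans with (K * Cmod (h (a, b) - h (u, v))%C).
  { apply Rmult_le_compat_r; [apply Cmod_ge_0| unfold K; lra]. }
  apply (Rmult_lt_compat_l K) in H'; auto. replace (K * (eps / K)) with eps in H' by (field; lra). auto.
Qed.

(* Differentiation under the integral sign, applied to the real functionals
   [re_im_comb al be], which together determine a complex number. *)
Lemma CInt_param_const (E D : R -> R -> C) a b d : a <= b -> 0 < d ->
  (forall s u t, 0 <= s <= 1 -> Rabs (u - s) < d -> is_pderive (fun v => E v t) u (D u t)) ->
  (forall s u t, 0 <= s <= 1 -> Rabs (u - s) < d -> pcont (E u) t) ->
  (forall s t, 0 <= s <= 1 -> pcont2 (fun q => D (fst q) (snd q)) (s, t)) ->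
  (forall s, 0 <= s <= 1 -> is_CInt (D s) a b 0%C) ->
  CInt (E 0) a b = CInt (E 1) a b.
Proof.
  intros Hab Hd HE HEc HDc HD0.
  assert (HEint : forall s u, 0 <= s <= 1 -> Rabs (u - s) < d -> is_CInt (E u) a b (CInt (E u) a b)).
  { intros s u Hs Hu. apply is_CInt_CInt. intros t _. eapply HEc; eauto. }
  assert (Hin : forall s, 0 <= s <= 1 -> Rabs (s - s) < d) by (intros; rewrite Rminus_eq_0, Rabs_R0; auto).
  assert (Key : forall al be, re_im_comb al be (CInt (E 0) a b) = re_im_comb al be (CInt (E 1) a b)).
  { intros al be.
    rewrite <- (is_RInt_unique (V := R_CompleteNormedModule) _ _ _ _
                  (is_CInt_re_im_comb al be _ _ _ _ (HEint 0 0 ltac:(lra) (Hin 0 ltac:(lra))))),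
            <- (is_RInt_unique (V := R_CompleteNormedModule) _ _ _ _
                  (is_CInt_re_im_comb al be _ _ _ _ (HEint 1 1 ltac:(lra) (Hin 1 ltac:(lra))))).
    apply (eq_is_derive (V := R_NormedModule) (fun s => RInt (fun t => re_im_comb al be (E s t)) a b)); [|lra].
    intros s Hs.
    assert (HDer : forall u t, Rabs (u - s) < d ->
              Derive (fun v => re_im_comb al be (E v t)) u = re_im_comb al be (D u t)).
    { intros u t Hu. apply is_derive_unique, is_pderive_re_im_comb. eapply HE; eauto. }
    assert (HI0 : RInt (fun t => Derive (fun u => re_im_comb al be (E u t)) s) a b = 0).
    { apply (is_RInt_unique (V := R_CompleteNormedModule)).
      apply (is_RInt_ext (fun t => re_im_comb al be (D s t))).
      - intros t _. symmetry. apply HDer. apply Hin; auto.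
      - replace 0 with (re_im_comb al be 0%C) by (unfold re_im_comb; simpl; ring).
        apply is_CInt_re_im_comb. auto. }
    change (is_derive (fun s => RInt (fun t => re_im_comb al be (E s t)) a b) s 0).
    rewrite <- HI0. apply (is_derive_RInt_param (fun u t => re_im_comb al be (E u t))).
    - exists (mkposreal d Hd). intros u Hu t _. exists (re_im_comb al be (D u t)).
      apply is_pderive_re_im_comb. eapply HE; eauto.
    - intros t _. eapply continuity_2d_pt_ext_loc;
        [|apply (pcont2_continuity_2d al be _ s t (HDc s t Hs))].
      exists (mkposreal d Hd). intros u v Hu _. simpl. symmetry. apply HDer. exact Hu.
    - exists (mkposreal d Hd). intros u Hu. eexists.
      apply is_CInt_re_im_comb. eapply HEint; eauto. }
  pose proof (Key 1 0) as K1. pose proof (Key 0 1) as K2. unfold re_im_comb in K1, K2.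
  apply injective_projections; lra.
Qed.

Definition C1_on_ball (R0 : R) (F F1 : C -> C) : Prop :=
  forall y, Cmod y < R0 -> is_cderive F y (F1 y) /\ ccont F1 y.

Definition cauchy_density (F : C -> C) (r t : R) : C := (F (circle r t) * circle r t)%C.

Lemma pcont_cauchy_density R0 F F1 r s : C1_on_ball R0 F F1 -> 0 <= r < R0 ->
  pcont (cauchy_density F r) s.
Proof.
  intros HC Hr. apply cont_wrt_mult; [|apply pcont_circle].
  apply (cont_wrt_comp _ F (circle r)); [|apply pcont_circle].
  destruct (HC (circle r s)) as [H1 _]; [rewrite Cmod_circle; lra|].
  eapply is_cderive_ccont; eauto.
Qed.

Definition segment_to_circle (z : C) (r u t : R) : C := (z + RtoC u * (circle r t - z))%C.

Lemma segment_to_circle_in_ball R0 r z s u t : 0 < r < R0 -> Cmod z < r -> 0 <= s <= 1 ->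
  Rabs (u - s) < (R0 - r) / (2 * r + 1) -> Cmod (segment_to_circle z r u t) < R0.
Proof.
  intros Hr Hz Hs Hu. unfold segment_to_circle.
  assert (A : Cmod (z + RtoC s * (circle r t - z))%C <= r).
  { replace (z + RtoC s * (circle r t - z))%C with (RtoC (1 - s) * z + RtoC s * circle r t)%C
      by (rewrite RtoC_minus; ring).
    eapply Rle_trans; [apply Cmod_triangle|]. rewrite !Cmod_mult, !Cmod_R, Cmod_circle by lra.
    rewrite !Rabs_pos_eq by lra. nra. }
  assert (B : Cmod (RtoC (u - s) * (circle r t - z)) <= Rabs (u - s) * (2 * r)).
  { rewrite Cmod_mult, Cmod_R. apply Rmult_le_compat_l; [apply Rabs_pos|].
    eapply Rle_trans; [apply Cmod_triangle|]. rewrite Cmod_opp, Cmod_circle; lra. }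
  assert (Rabs (u - s) * (2 * r + 1) < R0 - r).
  { apply (Rmult_lt_reg_r (/ (2 * r + 1))); [apply Rinv_0_lt_compat; lra|].
    rewrite Rmult_assoc, Rinv_r, Rmult_1_r by lra. exact Hu. }
  pose proof (Cmod_triangle (z + RtoC s * (circle r t - z)) (RtoC (u - s) * (circle r t - z))).
  replace (z + RtoC s * (circle r t - z) + RtoC (u - s) * (circle r t - z))%C
    with (z + RtoC u * (circle r t - z))%C in H0 by (rewrite RtoC_minus; ring).
  pose proof (Rabs_pos (u - s)). nra.
Qed.

Lemma is_pderive_segment_to_circle z r u t :
  is_pderive (segment_to_circle z r u) t (RtoC u * (Ci * circle r t))%C.
Proof.
  apply (is_pderive_ext (fun t => RtoC u * circle r t + (z - RtoC u * z))%C).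
  { intros; unfold segment_to_circle; ring. }
  apply is_pderive_plus_const, is_pderive_scal, is_pderive_circle.
Qed.

Lemma pcont_segment_to_circle z r u t : pcont (segment_to_circle z r u) t.
Proof. eapply is_pderive_pcont, is_pderive_segment_to_circle. Qed.

Lemma pcont2_segment_to_circle z r u t :
  pcont2 (fun q => segment_to_circle z r (fst q) (snd q)) (u, t).
Proof.
  unfold segment_to_circle.
  apply (cont_wrt_plus _ (fun _ => z) (fun q => RtoC (fst q) * (circle r (snd q) - z))%C);
    [apply cont_wrt_const|].
  apply (cont_wrt_mult _ (fun q => RtoC (fst q)) (fun q => circle r (snd q) - z)%C);
    [apply pcont2_fst, pcont_RtoC|].
  apply (pcont2_snd (fun v => circle r v - z)%C), (cont_wrt_plus _ (circle r) (fun _ => - z)%C);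
    [apply pcont_circle|apply cont_wrt_const].
Qed.

(* For s <> 0, [F (segment_to_circle z r s t) / (s i)] is a periodic primitive. *)
Lemma is_CInt_derivative_on_shrunk_circle R0 F F1 r z s :
  C1_on_ball R0 F F1 -> 0 < r < R0 -> Cmod z < r -> 0 <= s <= 1 ->
  is_CInt (fun t => F1 (segment_to_circle z r s t) * circle r t)%C 0 (2 * PI) 0%C.
Proof.
  intros HC Hr Hz Hs.
  assert (Hin : forall t, Cmod (segment_to_circle z r s t) < R0).
  { intros t. apply (segment_to_circle_in_ball R0 r z s); auto.
    rewrite Rminus_eq_0, Rabs_R0. apply Rdiv_lt_0_compat; lra. }
  assert (H2PI : 0 <= 2 * PI) by (pose proof two_PI_pos; lra).
  destruct (Req_dec s 0) as [->|Hs0].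
  - apply (is_CInt_closed_loop (fun t => - Ci * F1 z * circle r t)%C); auto.
    + rewrite circle_2PI. reflexivity.
    + intros t _. apply (is_pderive_ext_val _ _ (- Ci * F1 z * (Ci * circle r t))%C).
      { unfold segment_to_circle. replace (z + RtoC 0 * (circle r t - z))%C with z by ring.
        transitivity (- (Ci * Ci) * F1 z * circle r t)%C; [ring|]. rewrite Ci_mult_Ci. ring. }
      apply is_pderive_scal, is_pderive_circle.
    + intros t _. apply cont_wrt_mult; [|apply pcont_circle].
      apply (cont_wrt_comp _ F1); [apply HC, Hin|apply pcont_segment_to_circle].
  - apply (is_CInt_closed_loop (fun t => / (RtoC s * Ci) * F (segment_to_circle z r s t))%C); auto.
    + unfold segment_to_circle. rewrite circle_2PI. reflexivity.
    + intros t _. apply (is_pderive_ext_val _ _ (/ (RtoC s * Ci) * (F1 (segment_to_circle z r s t)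
                                                  * (RtoC s * (Ci * circle r t))))%C).
      { field. split; [apply Ci_nz|apply RtoC_neq_0; auto]. }
      apply is_pderive_scal, is_pderive_comp; [apply HC, Hin|apply is_pderive_segment_to_circle].
    + intros t _. apply cont_wrt_mult; [|apply pcont_circle].
      apply (cont_wrt_comp _ F1); [apply HC, Hin|apply pcont_segment_to_circle].
Qed.

(* The integrand of [cauchy_transform] for [F] at [z] is deformed into the one
   for the constant [F z] (covered by [cauchy_transform_circle_1]) by moving
   the argument of [F] along [segment_to_circle]; the derivative in the
   deformation parameter integrates to zero. *)
Theorem cauchy_integral_formula R0 F F1 r z : C1_on_ball R0 F F1 -> 0 < r < R0 -> Cmod z < r ->
  cauchy_transform r (cauchy_density F r) 1 z = (F z * RtoC (2 * PI))%C.
Proof.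
  intros HC Hr Hz.
  set (c := fun t => (circle r t * / (circle r t - z))%C).
  set (E := fun u t => (F (segment_to_circle z r u t) * c t)%C).
  set (d := (R0 - r) / (2 * r + 1)).
  assert (Hd : 0 < d) by (unfold d; apply Rdiv_lt_0_compat; lra).
  assert (Hin := fun s u t Hs => segment_to_circle_in_ball R0 r z s u t Hr Hz Hs).
  assert (Hnz : forall t, (circle r t - z)%C <> 0%C) by (intros; apply circle_minus_neq_0; auto).
  assert (Hc : forall t, pcont c t).
  { intros t. apply cont_wrt_mult; [apply pcont_circle|apply pcont_inv_circle_minus; auto]. }
  assert (Hconst : CInt (E 0) 0 (2 * PI) = CInt (E 1) 0 (2 * PI)).
  { apply (CInt_param_const E (fun u t => F1 (segment_to_circle z r u t) * circle r t)%C 0 (2 * PI) d);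
      auto; [pose proof two_PI_pos; lra|..].
    - intros s u t Hs Hu. unfold E.
      apply (is_pderive_ext_val _ _ (F1 (segment_to_circle z r u t) * (circle r t - z) * c t)%C).
      { unfold c. field. auto. }
      apply is_pderive_scal_r, (is_pderive_comp F (fun u => segment_to_circle z r u t)).
      + apply HC. eapply Hin; eauto.
      + eapply is_pderive_ext; [|apply (is_pderive_affine z (circle r t - z) u)].
        intros; unfold segment_to_circle; ring.
    - intros s u t Hs Hu. unfold E. apply cont_wrt_mult; auto.
      apply (cont_wrt_comp _ F); [|apply pcont_segment_to_circle].
      eapply is_cderive_ccont, HC. eapply Hin; eauto.
    - intros s t Hs. apply (cont_wrt_mult _ (fun q => F1 (segment_to_circle z r (fst q) (snd q)))
                             (fun q => circle r (snd q))); [|apply pcont2_snd, pcont_circle].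
      apply (cont_wrt_comp _ F1); [|apply pcont2_segment_to_circle].
      apply HC. apply (Hin s); auto. rewrite Rminus_eq_0, Rabs_R0. auto.
    - intros s Hs. eapply is_CInt_derivative_on_shrunk_circle; eauto. }
  assert (E1 : CInt (E 1) 0 (2 * PI) = cauchy_transform r (cauchy_density F r) 1 z).
  { unfold cauchy_transform. f_equal. apply functional_extensionality. intros t.
    unfold E, c, cauchy_kernel, cauchy_density, segment_to_circle.
    replace (z + RtoC 1 * (circle r t - z))%C with (circle r t) by ring. simpl. ring. }
  assert (E0 : CInt (E 0) 0 (2 * PI) = (F z * cauchy_transform r (circle r) 1 z)%C).
  { apply is_CInt_unique. eapply is_CInt_ext; [|apply is_CInt_scal, is_CInt_cauchy_transform; auto].
    - intros t _. unfold E, c, cauchy_kernel, segment_to_circle.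
      replace (z + RtoC 0 * (circle r t - z))%C with z by ring. simpl. ring.
    - intros; apply pcont_circle. }
  rewrite <- E1, <- Hconst, E0, cauchy_transform_circle_1; auto.
Qed.

(* [cauchy_integral r (cauchy_density F r) m] is the m-th derivative of F
   given by Cauchy's formula: m! / (2 π i) ∮ F(w) / (w - y)^(m+1) dw. *)
Definition cauchy_integral (r : R) (phi : R -> C) (m : nat) (y : C) : C :=
  (RtoC (INR (fact m) / (2 * PI)) * cauchy_transform r phi (S m) y)%C.

Lemma is_cderive_cauchy_integral r phi m y : (forall s, pcont phi s) -> Cmod y < r ->
  is_cderive (cauchy_integral r phi m) y (cauchy_integral r phi (S m) y).
Proof.
  intros Hp Hy. unfold cauchy_integral.
  apply (is_cderive_ext_val _ _ (RtoC (INR (fact m) / (2 * PI))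
                                   * (INR (S m) * cauchy_transform r phi (S (S m)) y))%C).
  { rewrite Cmult_assoc, <- RtoC_mult. f_equal. f_equal.
    change (fact (S m)) with (S m * fact m)%nat. rewrite mult_INR. field.
    pose proof two_PI_pos; lra. }
  apply is_cderive_scal, is_cderive_cauchy_transform; auto.
Qed.

Lemma C1_cauchy_integral r phi m : (forall s, pcont phi s) ->
  C1_on_ball r (cauchy_integral r phi m) (cauchy_integral r phi (S m)).
Proof.
  intros Hp y Hy. split; [apply is_cderive_cauchy_integral; auto|].
  eapply is_cderive_ccont, is_cderive_cauchy_integral; auto.
Qed.

Section CauchyRepresentation.

Variables (R0 r : R) (F F1 : C -> C).
Hypotheses (HC : C1_on_ball R0 F F1) (Hr : 0 < r < R0).

Let Hdens : forall s, pcont (cauchy_density F r) s.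
Proof. intros s. apply (pcont_cauchy_density R0 F F1); auto; lra. Qed.

Lemma cauchy_integral_0 y : Cmod y < r -> F y = cauchy_integral r (cauchy_density F r) 0 y.
Proof.
  intros Hy. unfold cauchy_integral. rewrite (cauchy_integral_formula R0 F F1) by auto.
  rewrite Cmult_comm, <- Cmult_assoc, <- RtoC_mult. simpl.
  replace (2 * PI * (1 / (2 * PI))) with 1 by (field; pose proof two_PI_pos; lra). ring.
Qed.

Lemma cauchy_integral_1 y : Cmod y < r -> F1 y = cauchy_integral r (cauchy_density F r) 1 y.
Proof.
  intros Hy. apply (is_cderive_unique F y); [apply HC; lra|].
  apply (is_cderive_ext_ball (cauchy_integral r (cauchy_density F r) 0) F y _ r Hy).
  - intros; symmetry; apply cauchy_integral_0; auto.
  - apply is_cderive_cauchy_integral; auto.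
Qed.

Lemma cauchy_integral_2 y f2 : Cmod y < r -> is_cderive F1 y f2 ->
  f2 = cauchy_integral r (cauchy_density F r) 2 y.
Proof.
  intros Hy HD. apply (is_cderive_unique F1 y); auto.
  apply (is_cderive_ext_ball (cauchy_integral r (cauchy_density F r) 1) F1 y _ r Hy).
  - intros; symmetry; apply cauchy_integral_1; auto.
  - apply is_cderive_cauchy_integral; auto.
Qed.

Definition div_density (t : R) : C := (F (circle r t) * / circle r t)%C.

Let Hdiv : forall s, pcont div_density s.
Proof.
  intros s. apply cont_wrt_mult.
  - apply (cont_wrt_comp _ F (circle r)); [|apply pcont_circle].
    destruct (HC (circle r s)) as [H1 _]; [rewrite Cmod_circle; lra|].
    eapply is_cderive_ccont; eauto.
  - apply pcont_inv; [apply pcont_circle|apply circle_neq_0; lra].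
Qed.

(* The quotient F(y) / y², as (2 π i)⁻¹ ∮ F(w) / (w² (w - y)) dw. *)
Definition div_sqr (y : C) : C := cauchy_integral r div_density 0 y.

Lemma C1_div_sqr : C1_on_ball r div_sqr (cauchy_integral r div_density 1).
Proof. apply C1_cauchy_integral; auto. Qed.

(* 1 + y/w + y²/(w(w - y)) = w/(w - y) *)
Lemma div_sqr_spec : F 0%C = 0%C -> F1 0%C = 0%C -> forall y, Cmod y < r -> F y = (y * y * div_sqr y)%C.
Proof.
  intros HF0 HF10 y Hy.
  assert (H0r : Cmod 0%C < r) by (rewrite Cmod_0; lra).
  assert (A0 : cauchy_transform r (cauchy_density F r) 1 0%C = 0%C).
  { rewrite (cauchy_integral_formula R0 F F1) by auto. rewrite HF0. ring. }
  assert (A1 : cauchy_transform r (cauchy_density F r) 2 0%C = 0%C).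
  { rewrite cauchy_integral_1 in HF10 by auto. unfold cauchy_integral in HF10.
    destruct (Ceq_dec (cauchy_transform r (cauchy_density F r) 2 0%C) 0%C) as [|Hne]; auto.
    exfalso. revert HF10. apply Cmult_neq_0; auto. apply RtoC_neq_0.
    simpl. pose proof two_PI_pos. apply Rgt_not_eq, Rdiv_lt_0_compat; lra. }
  pose proof (is_CInt_plus _ _ _ _ _ _
    (is_CInt_plus _ _ _ _ _ _ (is_CInt_cauchy_transform r (cauchy_density F r) 1 0%C Hdens H0r)
       (is_CInt_scal y _ _ _ _ (is_CInt_cauchy_transform r (cauchy_density F r) 2 0%C Hdens H0r)))
    (is_CInt_scal (y * y)%C _ _ _ _ (is_CInt_cauchy_transform r div_density 1 y Hdiv Hy))) as HI.
  rewrite A0, A1 in HI.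
  assert (E : cauchy_transform r (cauchy_density F r) 1 y
              = (y * y * cauchy_transform r div_density 1 y)%C).
  { replace (y * y * cauchy_transform r div_density 1 y)%C
      with (0 + y * 0 + y * y * cauchy_transform r div_density 1 y)%C by ring.
    apply is_CInt_unique. eapply is_CInt_ext; [|exact HI].
    intros t _. unfold cauchy_kernel, cauchy_density, div_density. simpl.
    assert (circle r t <> 0%C) by (apply circle_neq_0; lra).
    assert ((circle r t - y)%C <> 0%C) by (apply circle_minus_neq_0; auto).
    replace (circle r t - 0)%C with (circle r t) by ring. field. auto. }
  rewrite cauchy_integral_0 by auto. unfold div_sqr, cauchy_integral. rewrite E. ring.
Qed.

Lemma div_sqr_0 f20 : is_cderive F1 0%C f20 -> f20 = (2 * div_sqr 0%C)%C.
Proof.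
  intros HD. assert (H0r : Cmod 0%C < r) by (rewrite Cmod_0; lra).
  rewrite (cauchy_integral_2 0%C f20 H0r HD). unfold div_sqr, cauchy_integral.
  replace (cauchy_transform r (cauchy_density F r) 3 0%C) with (cauchy_transform r div_density 1 0%C).
  { rewrite Cmult_assoc, <- RtoC_mult. simpl. f_equal. f_equal. field. pose proof two_PI_pos; lra. }
  unfold cauchy_transform. f_equal. apply functional_extensionality. intros t.
  unfold cauchy_kernel, cauchy_density, div_density. simpl.
  assert (circle r t <> 0%C) by (apply circle_neq_0; lra).
  replace (circle r t - 0)%C with (circle r t) by ring. field. auto.
Qed.

End CauchyRepresentation.

(** * The maximum modulus principle *)

Lemma C1_on_ball_mono R0 R1 F F1 : R1 <= R0 -> C1_on_ball R0 F F1 -> C1_on_ball R1 F F1.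
Proof. intros HR HC y Hy. apply HC. lra. Qed.

Lemma C1_on_ball_mult R0 F F1 G G1 : C1_on_ball R0 F F1 -> C1_on_ball R0 G G1 ->
  C1_on_ball R0 (fun y => F y * G y)%C (fun y => F1 y * G y + F y * G1 y)%C.
Proof.
  intros HF HG y Hy. destruct (HF y Hy) as [DF CF], (HG y Hy) as [DG CG]. split.
  - apply is_cderive_mult; auto.
  - apply cont_wrt_plus; apply cont_wrt_mult; auto; eapply is_cderive_ccont; eauto.
Qed.

Section PoissonFactor.

Variables (rho : R) (zeta : C).
Hypotheses (Hrho : 0 < rho) (Hzeta : Cmod zeta < rho).

Definition poisson_radius : R := 2 * rho * rho / (rho + Cmod zeta).

Definition poisson_factor (y : C) : C :=
  (RtoC (rho * rho) / (RtoC (rho * rho) - Cconj zeta * y))%C.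

Definition poisson_factor_deriv (y : C) : C :=
  (RtoC (rho * rho) * Cconj zeta / ((RtoC (rho * rho) - Cconj zeta * y) * (RtoC (rho * rho) - Cconj zeta * y)))%C.

Lemma rho_lt_poisson_radius : rho < poisson_radius.
Proof.
  unfold poisson_radius. pose proof (Cmod_ge_0 zeta).
  apply (Rmult_lt_reg_r (rho + Cmod zeta)); [lra|].
  unfold Rdiv. rewrite Rmult_assoc, Rinv_l by lra. nra.
Qed.

Lemma poisson_denominator_neq_0 y : Cmod y < poisson_radius ->
  (RtoC (rho * rho) - Cconj zeta * y)%C <> 0%C.
Proof.
  intros Hy E. pose proof (Cmod_ge_0 y). pose proof (Cmod_ge_0 zeta).
  assert (Cmod zeta * Cmod y < rho * rho).
  { apply Rle_lt_trans with (Cmod zeta * poisson_radius); [apply Rmult_le_compat_l; lra|].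
    unfold poisson_radius.
    replace (Cmod zeta * (2 * rho * rho / (rho + Cmod zeta)))
      with (rho * rho * (2 * Cmod zeta / (rho + Cmod zeta))) by (field; lra).
    assert (2 * Cmod zeta / (rho + Cmod zeta) < 1).
    { apply (Rmult_lt_reg_r (rho + Cmod zeta)); [lra|].
      unfold Rdiv. rewrite Rmult_assoc, Rinv_l by lra. lra. }
    assert (0 < rho * rho) by nra. nra. }
  pose proof (Cmod_ge_Cmod_minus (RtoC (rho * rho)) (Cconj zeta * y)) as Hm.
  rewrite E, Cmod_0, Cmod_mult, Cmod_conj, Cmod_R, Rabs_pos_eq in Hm by nra. lra.
Qed.

Lemma C1_poisson_factor : C1_on_ball poisson_radius poisson_factor poisson_factor_deriv.
Proof.
  set (a := RtoC (rho * rho)). set (b := Cconj zeta).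
  assert (Hlin : forall y, is_cderive (fun y => a - b * y)%C y (- b)%C).
  { intros y. apply (is_cderive_ext_val _ _ (0 - b * 1)%C); [ring|].
    apply is_cderive_minus; [apply is_cderive_const|apply is_cderive_scal, is_cderive_id]. }
  intros y Hy. pose proof (poisson_denominator_neq_0 y Hy) as Hn. fold a b in Hn. split.
  - unfold poisson_factor, poisson_factor_deriv. fold a b.
    apply (is_cderive_ext_val _ _ (a * ((- b) * (- / ((a - b * y) * (a - b * y)))))%C).
    { field. auto. }
    apply is_cderive_scal, (is_cderive_comp (fun u => / u)%C (fun y => a - b * y)%C);
      [apply Hlin|apply is_cderive_inv; auto].
  - unfold poisson_factor_deriv. fold a b.
    apply cont_wrt_mult; [apply cont_wrt_const|].
    eapply is_cderive_ccont, (is_cderive_comp (fun u => / u)%C (fun y => (a - b * y) * (a - b * y))%C).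
    + apply is_cderive_mult; apply Hlin.
    + apply is_cderive_inv, Cmult_neq_0; auto.
Qed.

Lemma poisson_factor_center :
  poisson_factor zeta = RtoC (rho * rho / (rho * rho - Cmod zeta * Cmod zeta)).
Proof.
  unfold poisson_factor. pose proof (Cmod_ge_0 zeta).
  rewrite RtoC_div, RtoC_minus, (Cmult_comm (Cconj zeta)), Cmult_conj_Cmod; auto. nra.
Qed.

Definition poisson_kernel (t : R) : R :=
  rho * rho / (Cmod (circle rho t - zeta) * Cmod (circle rho t - zeta)).

(* With ρ² = w w̄ on the circle, ρ² w / ((ρ² - ζ̄ w)(w - ζ)) = ρ² / |w - ζ|². *)
Lemma cauchy_kernel_poisson_factor t :
  cauchy_kernel rho (cauchy_density poisson_factor rho) 1 zeta t = RtoC (poisson_kernel t).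
Proof.
  unfold cauchy_kernel, cauchy_density, poisson_factor, poisson_kernel. simpl.
  set (w := circle rho t).
  assert (Hw : w <> 0%C) by (apply circle_neq_0; auto).
  assert (Hwz : (w - zeta)%C <> 0%C) by (apply circle_minus_neq_0; auto).
  assert (Hcwz : (Cconj w - Cconj zeta)%C <> 0%C).
  { rewrite <- Cminus_conj. intro E. apply Hwz.
    rewrite <- (Cconj_conj (w - zeta)%C), E. apply injective_projections; simpl; ring. }
  assert (Hm : Cmod (w - zeta) <> 0) by (intro E; apply Hwz, Cmod_eq_0; auto).
  assert (Ha : RtoC (rho * rho) = (w * Cconj w)%C).
  { rewrite Cmult_conj_Cmod. unfold w. rewrite Cmod_circle by lra. reflexivity. }
  rewrite RtoC_div by (intro E; apply Hm; nra).
  rewrite <- Cmult_conj_Cmod, Ha, Cminus_conj.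
  replace (w * Cconj w - Cconj zeta * w)%C with (w * (Cconj w - Cconj zeta))%C by ring.
  field. repeat split; auto.
Qed.

Lemma poisson_kernel_ge_0 t : 0 <= poisson_kernel t.
Proof.
  unfold poisson_kernel. apply Rmult_le_pos; [nra|]. apply Rlt_le, Rinv_0_lt_compat.
  assert (0 < Cmod (circle rho t - zeta)) by (apply Cmod_gt_0, circle_minus_neq_0; auto). nra.
Qed.

End PoissonFactor.

(* Cauchy's formula for K q and for q, with q the Poisson factor, expresses
   K(ζ) as an average of the values of K on the circle against the positive
   Poisson kernel. *)
Theorem maximum_modulus_disk R0 K K1 rho zeta M : C1_on_ball R0 K K1 -> 0 < rho < R0 ->
  Cmod zeta < rho -> (forall t, Cmod (K (circle rho t)) <= M) -> Cmod (K zeta) <= M.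
Proof.
  intros HC Hr Hz HM.
  set (R1 := Rmin R0 (poisson_radius rho zeta)).
  assert (HR1 : rho < R1) by (apply Rmin_glb_lt; [lra|apply rho_lt_poisson_radius; lra]).
  assert (Cq := C1_on_ball_mono _ R1 _ _ (Rmin_r _ _) (C1_poisson_factor rho zeta (proj1 Hr) Hz)).
  assert (CKq := C1_on_ball_mult R1 _ _ _ _ (C1_on_ball_mono _ R1 _ _ (Rmin_l _ _) HC) Cq).
  set (q := poisson_factor rho zeta) in *.
  set (P := poisson_kernel rho zeta).
  set (Q := rho * rho / (rho * rho - Cmod zeta * Cmod zeta)).
  assert (HQ : 0 < Q * (2 * PI)).
  { pose proof two_PI_pos. pose proof (Cmod_ge_0 zeta).
    assert (0 < Q) by (apply Rdiv_lt_0_compat; nra). nra. }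
  assert (Hq : q zeta = RtoC Q) by (apply poisson_factor_center; lra).
  assert (Hdens : forall F F1, C1_on_ball R1 F F1 -> forall s, pcont (cauchy_density F rho) s)
    by (intros; eapply pcont_cauchy_density; eauto; lra).
  assert (IP : is_RInt P 0 (2 * PI) (Q * (2 * PI))).
  { destruct (is_CInt_cauchy_transform rho _ 1 zeta (Hdens _ _ Cq) Hz) as [IP _].
    rewrite (cauchy_integral_formula R1 _ _ rho zeta Cq) in IP by lra. rewrite Hq in IP.
    replace (Q * (2 * PI)) with (fst (RtoC Q * RtoC (2 * PI))%C) by (simpl; ring).
    eapply is_RInt_ext; [|exact IP]. intros t _. unfold q. rewrite cauchy_kernel_poisson_factor by lra.
    reflexivity. }
  assert (IKP : is_CInt (fun t => K (circle rho t) * RtoC (P t))%C 0 (2 * PI)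
                  (K zeta * RtoC Q * RtoC (2 * PI))%C).
  { pose proof (is_CInt_cauchy_transform rho _ 1 zeta (Hdens _ _ CKq) Hz) as IKq.
    rewrite (cauchy_integral_formula R1 _ _ rho zeta CKq) in IKq by lra. fold q in IKq. rewrite Hq in IKq.
    eapply is_CInt_ext; [|exact IKq]. intros t _. unfold P, q.
    rewrite <- cauchy_kernel_poisson_factor by lra. unfold cauchy_kernel, cauchy_density. ring. }
  assert (Hbd : Cmod (K zeta * RtoC Q * RtoC (2 * PI))%C <= M * (Q * (2 * PI))).
  { apply (Cmod_is_CInt_le _ (fun t => M * P t) 0 (2 * PI) _ _ ltac:(pose proof two_PI_pos; lra) IKP).
    - apply (is_RInt_scal _ 0 (2 * PI) M _ IP).
    - intros t _. assert (HP : 0 <= P t) by (apply poisson_kernel_ge_0; lra).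
      rewrite Cmod_mult, Cmod_R, Rabs_pos_eq by exact HP.
      apply Rmult_le_compat_r; [exact HP|apply HM]. }
  rewrite !Cmod_mult, !Cmod_R, !Rabs_pos_eq, Rmult_assoc in Hbd by (pose proof two_PI_pos; nra).
  apply (Rmult_le_reg_r (Q * (2 * PI))); auto.
Qed.

(** * The functions g and k *)

Lemma C1_second_derivative R0 F F1 F2 r :
  (forall y, Cmod y < R0 -> is_cderive F y (F1 y)) ->
  (forall y, Cmod y < R0 -> is_cderive F1 y (F2 y)) -> 0 < r < R0 ->
  C1_on_ball r F2 (cauchy_integral r (cauchy_density F r) 3).
Proof.
  intros HF HF1 Hr.
  assert (HC : C1_on_ball R0 F F1) by (intros y Hy; split; [|eapply is_cderive_ccont]; eauto).
  assert (Hdens : forall s, pcont (cauchy_density F r) s)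
    by (intros; eapply pcont_cauchy_density; eauto; lra).
  assert (E : forall y, Cmod y < r -> cauchy_integral r (cauchy_density F r) 2 y = F2 y)
    by (intros; symmetry; eapply cauchy_integral_2; eauto; apply HF1; lra).
  intros y Hy. destruct (C1_cauchy_integral r _ 2 Hdens y Hy) as [HD Hc]. split; auto.
  eapply is_cderive_ext_ball; eauto.
Qed.

Definition g_of (f f1 : C -> C) (y : C) : C := (y * f1 y - f y)%C.

Definition k_of (f f1 f2 : C -> C) (y : C) : C := (y * y * f2 y + y * f1 y - f y)%C.

Section DerivedFunctions.

Variables (f f1 f2 : C -> C).
Hypotheses (Hf : forall y, Cmod y < 1 -> is_cderive f y (f1 y))
           (Hf1 : forall y, Cmod y < 1 -> is_cderive f1 y (f2 y)).

Let f3 (r : R) : C -> C := cauchy_integral r (cauchy_density f r) 3.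

Let C1_f2 r : 0 < r < 1 -> C1_on_ball r f2 (f3 r).
Proof. intros. eapply C1_second_derivative; eauto. Qed.

Lemma C1_g_of r : 0 < r < 1 -> C1_on_ball r (g_of f f1) (fun y => y * f2 y)%C.
Proof.
  intros Hr y Hy. split.
  - unfold g_of. apply (is_cderive_ext_val _ _ ((1 * f1 y + y * f2 y) - f1 y)%C); [ring|].
    apply is_cderive_minus; [apply is_cderive_mult; [apply is_cderive_id|]|]; [apply Hf1|apply Hf]; lra.
  - apply cont_wrt_mult; [apply ccont_id|]. eapply is_cderive_ccont, C1_f2; eauto.
Qed.

Lemma C1_k_of r : 0 < r < 1 ->
  C1_on_ball r (k_of f f1 f2) (fun y => 3 * y * f2 y + y * y * f3 r y)%C.
Proof.
  intros Hr y Hy. destruct (C1_f2 r Hr y Hy) as [D2 C3]. split.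
  - unfold k_of.
    apply (is_cderive_ext_val _ _ (((1 * y + y * 1) * f2 y + y * y * f3 r y) + (1 * f1 y + y * f2 y) - f1 y)%C).
    { replace (RtoC 3) with (1 + 1 + 1)%C by (apply injective_projections; simpl; ring). ring. }
    apply (is_cderive_minus (fun y => y * y * f2 y + y * f1 y)%C f); [|apply Hf; lra].
    apply (is_cderive_plus (fun y => y * y * f2 y)%C (fun y => y * f1 y)%C).
    + apply (is_cderive_mult (fun y => y * y)%C f2); auto.
      apply (is_cderive_mult (fun y => y) (fun y => y)); apply is_cderive_id.
    + apply (is_cderive_mult (fun y => y) f1); [apply is_cderive_id|apply Hf1; lra].
  - apply cont_wrt_plus; apply cont_wrt_mult.
    + apply cont_wrt_mult; [apply cont_wrt_const|apply ccont_id].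
    + eapply is_cderive_ccont; eauto.
    + apply cont_wrt_mult; apply ccont_id.
    + exact C3.
Qed.

Lemma is_cderive_mult_g_of y : Cmod y < 1 -> is_cderive (fun y => y * g_of f f1 y)%C y (k_of f f1 f2 y).
Proof.
  intros Hy. unfold g_of.
  apply (is_cderive_ext_val _ _ (1 * (y * f1 y - f y) + y * ((1 * f1 y + y * f2 y) - f1 y))%C).
  { unfold k_of. ring. }
  apply (is_cderive_mult (fun y => y) (fun y => y * f1 y - f y)%C); [apply is_cderive_id|].
  apply (is_cderive_minus (fun y => y * f1 y)%C f); [|apply Hf; auto].
  apply (is_cderive_mult (fun y => y) f1); [apply is_cderive_id|apply Hf1; auto].
Qed.

Hypothesis (Hf0 : f 0%C = 0%C).

Lemma g_of_div_sqr r : 0 < r < 1 -> forall y, Cmod y < r -> g_of f f1 y = (y * y * div_sqr r (g_of f f1) y)%C.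
Proof.
  intros Hr. apply (div_sqr_spec ((r + 1) / 2) r _ (fun y => y * f2 y)%C); [apply C1_g_of; lra|lra| |].
  - unfold g_of. rewrite Hf0. ring.
  - ring.
Qed.

Lemma g_of_div_sqr_0 r : 0 < r < 1 -> (2 * div_sqr r (g_of f f1) 0%C)%C = f2 0%C.
Proof.
  intros Hr. symmetry. apply (div_sqr_0 ((r + 1) / 2) r _ (fun y => y * f2 y)%C); [apply C1_g_of; lra|lra|].
  apply (is_cderive_ext_val _ _ (1 * f2 0%C + 0 * f3 ((r + 1) / 2) 0%C)%C); [ring|].
  apply is_cderive_mult; [apply is_cderive_id|]. apply C1_f2; [lra|rewrite Cmod_0; lra].
Qed.

Lemma k_of_div_sqr r : 0 < r < 1 -> forall y, Cmod y < r -> k_of f f1 f2 y = (y * y * div_sqr r (k_of f f1 f2) y)%C.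
Proof.
  intros Hr. apply (div_sqr_spec ((r + 1) / 2) r _ _ (C1_k_of ((r + 1) / 2) ltac:(lra))); [lra| |].
  - unfold k_of. rewrite Hf0. ring.
  - ring.
Qed.

End DerivedFunctions.

Lemma is_RInt_sqr_0_1 : is_RInt (fun t => t * t) 0 1 (1 / 3).
Proof.
  replace (1 / 3) with (minus (1 * 1 * 1 / 3) (0 * 0 * 0 / 3)) by (cbn; field).
  apply (is_RInt_derive (V := R_CompleteNormedModule) (fun t => t * t * t / 3)); intros x _.
  - auto_derive; auto. field.
  - apply continuity_pt_filterlim, continuity_pt_mult; apply continuity_pt_id.
Qed.

Lemma le_of_le_div_sqr (x c m : R) : 0 <= c -> 0 <= m < 1 ->
  (forall rho, m < rho < 1 -> x <= c / (rho * rho)) -> x <= c.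
Proof.
  intros Hc Hm H. destruct (Rle_or_lt x c) as [|Hx]; auto. exfalso.
  set (tau := Rmax m (c / x)).
  assert (Hcx : c / x < 1).
  { apply (Rmult_lt_reg_r x); [lra|]. unfold Rdiv. rewrite Rmult_assoc, Rinv_l; lra. }
  assert (Ht1 : tau < 1) by (apply Rmax_lub_lt; lra).
  assert (Ht0 : m <= tau) by apply Rmax_l.
  assert (Ht2 : c <= tau * x).
  { apply (Rmult_le_reg_r (/ x)); [apply Rinv_0_lt_compat; lra|].
    rewrite Rmult_assoc, Rinv_r, Rmult_1_r by lra. apply Rmax_r. }
  set (rho := (1 + tau) / 2).
  specialize (H rho ltac:(unfold rho; lra)).
  assert (Hrr : tau < rho * rho) by (unfold rho; nra).
  assert (c / (rho * rho) < x); [|lra].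
  apply (Rmult_lt_reg_r (rho * rho)); [nra|].
  unfold Rdiv. rewrite Rmult_assoc, Rinv_l by nra. nra.
Qed.

Lemma Cmod_le_of_ccont F z M d : 0 < d -> ccont F z ->
  (forall y, y <> z -> Cmod (y - z) < d -> Cmod (F y) <= M) -> Cmod (F z) <= M.
Proof.
  intros Hd Hc HM. destruct (Rle_or_lt (Cmod (F z)) M) as [|Hgt]; auto. exfalso.
  destruct (Hc (Cmod (F z) - M) ltac:(lra)) as [e [He Hce]].
  set (y := (z + RtoC (Rmin e d / 2))%C).
  assert (Hmin : 0 < Rmin e d) by (apply Rmin_pos; lra).
  assert (Hy : Cmod (y - z) = Rmin e d / 2).
  { unfold y. replace (z + RtoC (Rmin e d / 2) - z)%C with (RtoC (Rmin e d / 2)) by ring.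
    rewrite Cmod_R, Rabs_pos_eq; lra. }
  assert (Hyz : y <> z).
  { intro E. rewrite E in Hy. replace (z - z)%C with (RtoC 0) in Hy by ring. rewrite Cmod_0 in Hy. lra. }
  pose proof (Rmin_l e d). pose proof (Rmin_r e d).
  specialize (Hce y ltac:(lra)). specialize (HM y Hyz ltac:(lra)).
  pose proof (Cmod_ge_Cmod_minus (F z) (F y)). rewrite Cmod_minus_sym in H1. lra.
Qed.

Section SecondOrderBound.

Variables (f f1 f2 : C -> C) (lam : R).
Hypotheses (Hf : forall y, Cmod y < 1 -> is_cderive f y (f1 y))
           (Hf1 : forall y, Cmod y < 1 -> is_cderive f1 y (f2 y))
           (Hf0 : f 0%C = 0%C) (Hlam : 0 < lam)
           (Hk : forall y, Cmod y < 1 -> Cmod (k_of f f1 f2 y) <= 3 * lam).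

Let C1_div_sqr_k_of r : 0 < r < 1 ->
  exists K1, C1_on_ball r (div_sqr r (k_of f f1 f2)) K1.
Proof.
  intros Hr. eexists. eapply C1_div_sqr; [apply C1_k_of with (r := (r + 1) / 2)|]; auto; lra.
Qed.

(* Schwarz's lemma for k, which vanishes to second order at 0. *)
Lemma div_sqr_k_of_bound rho zeta : 0 < rho < 1 -> Cmod zeta < rho ->
  Cmod (div_sqr ((rho + 1) / 2) (k_of f f1 f2) zeta) <= 3 * lam / (rho * rho).
Proof.
  intros Hrho Hz. destruct (C1_div_sqr_k_of ((rho + 1) / 2) ltac:(lra)) as [K1 HC].
  apply (maximum_modulus_disk _ _ K1 rho zeta _ HC); [lra|auto|].
  intros t. assert (Hw : Cmod (circle rho t) = rho) by (apply Cmod_circle; lra).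
  pose proof (Hk (circle rho t) ltac:(lra)) as Hkw.
  rewrite (k_of_div_sqr f f1 f2 Hf Hf1 Hf0 ((rho + 1) / 2)) in Hkw by lra.
  rewrite !Cmod_mult, Hw in Hkw.
  apply (Rmult_le_reg_r (rho * rho)); [nra|].
  unfold Rdiv. rewrite Rmult_assoc, Rinv_l by nra. lra.
Qed.

(* z g(z) = ∫₀¹ k(t z) z dt, and |k(t z)| <= 3 λ t² |z|² / ρ². *)
Lemma Cmod_g_of_le_div_sqr z rho : 0 < Cmod z -> Cmod z < rho < 1 ->
  Cmod (g_of f f1 z) <= lam * (Cmod z * Cmod z) / (rho * rho).
Proof.
  intros Hz Hrho. set (m := Cmod z) in *. set (r0 := (rho + 1) / 2).
  set (K := div_sqr r0 (k_of f f1 f2)).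
  destruct (C1_div_sqr_k_of r0 ltac:(unfold r0; lra)) as [K1 HC].
  assert (Hin : forall t, 0 <= t <= 1 -> Cmod (RtoC t * z)%C <= m).
  { intros t Ht. rewrite Cmod_mult, Cmod_R, Rabs_pos_eq by lra. fold m. nra. }
  set (I := fun t : R => (RtoC t * z * (RtoC t * z) * K (RtoC t * z) * z)%C).
  assert (HI : is_CInt I 0 1 (z * g_of f f1 z)%C).
  { replace (z * g_of f f1 z)%C
      with (RtoC 1 * z * g_of f f1 (RtoC 1 * z) - RtoC 0 * z * g_of f f1 (RtoC 0 * z))%C
      by (replace (RtoC 1 * z)%C with z by ring; ring).
    apply (is_CInt_derive (fun t => RtoC t * z * g_of f f1 (RtoC t * z))%C); [lra|..];
      intros t Ht; specialize (Hin t Ht).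
    - apply (is_pderive_ext_val _ _ (k_of f f1 f2 (RtoC t * z) * z)%C).
      { unfold I, K. rewrite (k_of_div_sqr f f1 f2 Hf Hf1 Hf0 r0) by (unfold r0; lra). ring. }
      apply (is_pderive_comp (fun y => y * g_of f f1 y)%C (fun t => RtoC t * z)%C).
      + apply is_cderive_mult_g_of; auto. lra.
      + eapply is_pderive_ext; [|apply (is_pderive_affine 0 z t)]. intros; simpl; ring.
    - assert (Hp : pcont (fun t => RtoC t * z)%C t) by (apply cont_wrt_mult; [apply pcont_RtoC|apply cont_wrt_const]).
      unfold I. apply cont_wrt_mult; [|apply cont_wrt_const].
      apply cont_wrt_mult; [apply cont_wrt_mult; auto|].
      apply (cont_wrt_comp _ K (fun t => RtoC t * z)%C); auto.
      eapply is_cderive_ccont, HC. unfold r0; lra. }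
  set (C0 := m * m * m * (3 * lam / (rho * rho))).
  assert (Hbd : Cmod (z * g_of f f1 z)%C <= C0 * (1 / 3)).
  { apply (Cmod_is_CInt_le I (fun t => C0 * (t * t)) 0 1 _ _ ltac:(lra) HI (is_RInt_scal _ 0 1 C0 _ is_RInt_sqr_0_1)).
    intros t Ht. unfold I. specialize (Hin t Ht).
    rewrite !Cmod_mult, Cmod_R, Rabs_pos_eq by lra. fold m.
    pose proof (div_sqr_k_of_bound rho (RtoC t * z) ltac:(lra) ltac:(lra)) as HK. fold r0 K in HK.
    pose proof (Cmod_ge_0 (K (RtoC t * z))%C).
    replace (t * m * (t * m) * Cmod (K (RtoC t * z)%C) * m)
      with ((t * t * (m * m * m)) * Cmod (K (RtoC t * z)%C)) by ring.
    replace (C0 * (t * t)) with ((t * t * (m * m * m)) * (3 * lam / (rho * rho))) by (unfold C0; ring).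
    apply Rmult_le_compat_l; auto. apply Rmult_le_pos; [nra|]. apply Rmult_le_pos; nra. }
  rewrite Cmod_mult in Hbd. fold m in Hbd.
  apply (Rmult_le_reg_l m); auto.
  replace (m * (lam * (m * m) / (rho * rho))) with (C0 * (1 / 3)) by (unfold C0; field; nra).
  auto.
Qed.

Lemma Cmod_g_of_le z : Cmod z < 1 -> Cmod (g_of f f1 z) <= lam * (Cmod z * Cmod z).
Proof.
  intros Hz. destruct (Ceq_dec z 0) as [->|Hz0].
  { unfold g_of. rewrite Hf0, Cmod_0. replace (0 * f1 0 - 0)%C with (RtoC 0) by ring.
    rewrite Cmod_0. lra. }
  assert (Hm : 0 < Cmod z) by (apply Cmod_gt_0; auto).
  apply (le_of_le_div_sqr _ _ (Cmod z)); [nra|lra|].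
  intros rho Hrho. apply Cmod_g_of_le_div_sqr; auto; lra.
Qed.

End SecondOrderBound.

(* g(y) / (λ y²), extended continuously at 0 where g(y) ~ f''(0) y² / 2. *)
Definition omega_phi (f f1 f2 : C -> C) (lam : R) (y : C) : C :=
  if Ceq_dec y 0 then (f2 0%C / (2 * lam))%C else (g_of f f1 y / (lam * (y * y)))%C.

Section OmegaPhi.

Variables (f f1 f2 : C -> C) (lam : R).
Hypotheses (Hf : forall y, Cmod y < 1 -> is_cderive f y (f1 y))
           (Hf1 : forall y, Cmod y < 1 -> is_cderive f1 y (f2 y))
           (Hf0 : f 0%C = 0%C) (Hlam : 0 < lam).

Lemma omega_phi_div_sqr r : 0 < r < 1 -> forall y, Cmod y < r ->
  omega_phi f f1 f2 lam y = (/ lam * div_sqr r (g_of f f1) y)%C.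
Proof.
  intros Hr y Hy. assert (Hl : RtoC lam <> 0%C) by (apply RtoC_neq_0; lra).
  unfold omega_phi. destruct (Ceq_dec y 0) as [->|Hy0].
  - rewrite <- (g_of_div_sqr_0 f f1 f2 Hf Hf1 r Hr). field. auto.
  - rewrite (g_of_div_sqr f f1 f2 Hf Hf1 Hf0 r Hr y Hy). field. auto.
Qed.

Lemma is_cderive_omega_phi z : Cmod z < 1 -> exists l, is_cderive (omega_phi f f1 f2 lam) z l.
Proof.
  intros Hz. set (r := (Cmod z + 1) / 2). pose proof (Cmod_ge_0 z).
  assert (Hr : 0 < r < 1) by (unfold r; lra).
  destruct (C1_div_sqr _ r _ _ (C1_g_of f f1 f2 Hf Hf1 ((r + 1) / 2) ltac:(lra)) ltac:(lra) z
              ltac:(unfold r; lra)) as [HD _].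
  eexists. apply (is_cderive_ext_ball (fun y => / lam * div_sqr r (g_of f f1) y)%C _ z _ r);
    [unfold r; lra| |apply is_cderive_scal, HD].
  intros; symmetry; apply omega_phi_div_sqr; auto.
Qed.

Lemma omega_phi_spec y : (y * f1 y - f y)%C = (lam * y ^ 2 * omega_phi f f1 f2 lam y)%C.
Proof.
  assert (Hl : RtoC lam <> 0%C) by (apply RtoC_neq_0; lra).
  unfold omega_phi. destruct (Ceq_dec y 0) as [->|Hy0].
  - rewrite Hf0. simpl. ring.
  - unfold g_of. field. auto.
Qed.

Hypothesis (Hk : forall y, Cmod y < 1 -> Cmod (k_of f f1 f2 y) <= 3 * lam).

Lemma Cmod_omega_phi_le y : Cmod y < 1 -> Cmod (omega_phi f f1 f2 lam y) <= 1.
Proof.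
  intros Hy.
  assert (Hbd : forall x : C, x <> 0%C -> Cmod x < 1 -> Cmod (omega_phi f f1 f2 lam x) <= 1).
  { intros x Hx0 Hx. assert (Hm : 0 < Cmod x) by (apply Cmod_gt_0; auto).
    assert (Hl : RtoC lam <> 0%C) by (apply RtoC_neq_0; lra).
    unfold omega_phi. destruct (Ceq_dec x 0) as [|_]; [contradiction|].
    rewrite Cmod_div by (apply Cmult_neq_0; auto; apply Cmult_neq_0; auto).
    rewrite !Cmod_mult, Cmod_R, Rabs_pos_eq by lra.
    apply (Rmult_le_reg_r (lam * (Cmod x * Cmod x))); [apply Rmult_lt_0_compat; nra|].
    unfold Rdiv. rewrite Rmult_assoc, Rinv_l, Rmult_1_r, Rmult_1_l by (apply Rgt_not_eq, Rmult_lt_0_compat; nra).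
    apply (Cmod_g_of_le f f1 f2 lam); auto. }
  destruct (Ceq_dec y 0) as [->|Hy0]; auto.
  destruct (is_cderive_omega_phi 0%C ltac:(rewrite Cmod_0; lra)) as [l Hl].
  apply (Cmod_le_of_ccont _ _ _ 1 ltac:(lra) (is_cderive_ccont _ _ _ Hl)).
  intros x Hx. replace (x - 0)%C with x by ring. auto.
Qed.

End OmegaPhi.

Theorem Omega_of_bound (lam : R) (f f1 f2 : C -> C) : 0 < lam ->
  derivative_on_D f f1 -> derivative_on_D f1 f2 -> f 0%C = 0%C -> f1 0%C = 1%C ->
  (forall z, inD z -> Cmod (z ^ 2 * f2 z + z * f1 z - f z)%C <= 3 * lam) -> Omega lam f.
Proof.
  intros Hlam Hd1 Hd2 Hf0 Hf10 Hb.
  assert (Hf : forall y, Cmod y < 1 -> is_cderive f y (f1 y)) by (intros; apply is_cderive_iff, Hd1; auto).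
  assert (Hf1 : forall y, Cmod y < 1 -> is_cderive f1 y (f2 y)) by (intros; apply is_cderive_iff, Hd2; auto).
  assert (Hk : forall y, Cmod y < 1 -> Cmod (k_of f f1 f2 y) <= 3 * lam).
  { intros y Hy. unfold k_of. replace (y * y * f2 y)%C with (y ^ 2 * f2 y)%C by ring. apply Hb; auto. }
  exists f1. split; [exact Hd1|]. split; [exact Hf0|]. split; [exact Hf10|].
  exists (omega_phi f f1 f2 lam). split; [|split].
  - intros z Hz. destruct (is_cderive_omega_phi f f1 f2 lam Hf Hf1 Hf0 Hlam z Hz) as [l Hl].
    exists l. apply is_cderive_iff. auto.
  - intros z Hz. apply Cmod_omega_phi_le; auto.
  - intros z _. apply omega_phi_spec; auto.
Qed.

(** * The extremal function *)

Section Extremal.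

Variable (a : R).

Let f (y : C) : C := (y + a * (y * y))%C.
Let f1 (y : C) : C := (1 + 2 * a * y)%C.
Let f2 (_ : C) : C := RtoC (2 * a).

Let is_cderive_f y : is_cderive f y (f1 y).
Proof.
  unfold f, f1. apply (is_cderive_ext_val _ _ (1 + a * (1 * y + y * 1))%C).
  { ring. }
  apply (is_cderive_plus (fun y => y) (fun y => a * (y * y))%C); [apply is_cderive_id|].
  apply is_cderive_scal, (is_cderive_mult (fun y => y) (fun y => y)); apply is_cderive_id.
Qed.

Let is_cderive_f1 y : is_cderive f1 y (f2 y).
Proof.
  unfold f1, f2. apply (is_cderive_ext_val _ _ (0 + 2 * a * 1)%C); [rewrite RtoC_mult; ring|].
  apply is_cderive_plus; [apply is_cderive_const|apply is_cderive_scal, is_cderive_id].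
Qed.

Lemma derivative_on_D_z_plus_a_z2 :
  derivative_on_D (fun y => y + a * (y * y))%C (fun y => 1 + 2 * a * y)%C.
Proof. intros z _. apply is_cderive_iff, is_cderive_f. Qed.

Lemma derivative_on_D_1_plus_2a_z : derivative_on_D (fun y => 1 + 2 * a * y)%C (fun _ => RtoC (2 * a)).
Proof. intros z _. apply is_cderive_iff, is_cderive_f1. Qed.

Lemma k_of_z_plus_a_z2 y : (y ^ 2 * f2 y + y * f1 y - f y)%C = (RtoC (3 * a) * (y * y))%C.
Proof. unfold f, f1, f2. rewrite !RtoC_mult. ring. Qed.

(* φ would have to be the constant a/λ. *)
Lemma not_Omega_z_plus_a_z2 lam : 0 < lam < a -> ~ Omega lam f.
Proof.
  intros Hlam [f1' [Hd [_ [_ [phi [_ [Hb Heq]]]]]]].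
  set (h := RtoC (1 / 2)).
  assert (Hh : inD h) by (unfold inD, h; rewrite Cmod_R, Rabs_pos_eq; lra).
  assert (Hh0 : h <> 0%C) by (apply RtoC_neq_0; lra).
  assert (E1 : f1' h = f1 h) by (apply (is_cderive_unique f h); [apply is_cderive_iff, Hd; auto|auto]).
  specialize (Heq h Hh). specialize (Hb h Hh). rewrite E1 in Heq.
  assert (Ep : phi h = RtoC (a / lam)).
  { assert (Hl : RtoC lam <> 0%C) by (apply RtoC_neq_0; lra).
    rewrite RtoC_div by lra.
    transitivity ((RtoC lam * h ^ 2 * phi h) / (RtoC lam * h ^ 2))%C; [field; auto|].
    rewrite <- Heq. unfold f, f1. field. auto. }
  rewrite Ep, Cmod_R, Rabs_pos_eq in Hb by (apply Rlt_le, Rdiv_lt_0_compat; lra).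
  apply (Rmult_le_compat_r lam) in Hb; [|lra].
  unfold Rdiv in Hb. rewrite Rmult_assoc, Rinv_l in Hb by lra. lra.
Qed.

End Extremal.

Theorem theorem4p4 (lam : R) (Hlam : 0 < lam) :
  (forall f f1 f2 : C -> C,
     derivative_on_D f f1 -> derivative_on_D f1 f2 ->
     f 0%C = 0%C -> f1 0%C = 1%C ->
     (forall z, inD z -> Cmod (z ^ 2 * f2 z + z * f1 z - f z)%C <= 3 * lam) ->
     Omega lam f)
  /\
  (* 3 lambda is best possible: it cannot be replaced by any larger constant *)
  (forall mu : R, 3 * lam < mu ->
     exists f f1 f2 : C -> C,
       derivative_on_D f f1 /\ derivative_on_D f1 f2 /\
       f 0%C = 0%C /\ f1 0%C = 1%C /\
       (forall z, inD z -> Cmod (z ^ 2 * f2 z + z * f1 z - f z)%C <= mu) /\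
       ~ Omega lam f).
Proof.
  split; [intros f f1 f2; apply (Omega_of_bound lam f f1 f2 Hlam)|].
  intros mu Hmu. set (a := mu / 3).
  exists (fun y => y + a * (y * y))%C, (fun y => 1 + 2 * a * y)%C, (fun _ => RtoC (2 * a)).
  split; [|split; [|split; [|split; [|split]]]].
  - apply derivative_on_D_z_plus_a_z2.
  - apply derivative_on_D_1_plus_2a_z.
  - ring.
  - ring.
  - intros z Hz. unfold inD in Hz. rewrite k_of_z_plus_a_z2, !Cmod_mult, Cmod_R, Rabs_pos_eq by (unfold a; lra).
    pose proof (Cmod_ge_0 z). assert (Cmod z * Cmod z <= 1) by nra. unfold a. nra.
  - apply not_Omega_z_plus_a_z2. unfold a. lra.
Qed.
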